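(* Consider the finite volume scheme $q_i^{n+1}=q_i^n-\frac{\Delta t}{\Delta x_i}\big(\mathcal F_l(q_i^n,q_{i+1}^n)-\mathcal F_r(q_{i-1}^n,q_i^n)\big)$ described in the context, with pseudo-conservative variable $q=(h,hu,h\sigma_{xx},h\sigma_{zz})$, with relaxation speeds $c_l,c_r$ chosen as in the context, under the CFL condition $\Delta t\,A(q_i^n,q_{i+1}^n)\le\frac12\min(\Delta x_i,\Delta x_{i+1})$ for all $i$. Then: (i) it is consistent with the system of the context for smooth solutions; (ii) it keeps the positivity of $h,\sigma_{xx},\sigma_{zz}$: if all $q_i^n$ have $h>0,\sigma_{xx}>0,\sigma_{zz}>0$, so do all $q_i^{n+1}$; (iii) it is conservative in the variables $h$ and $hu$ (the first two components of $\mathcal F_l(q_l,q_r)$ and $\mathcal F_r(q_l,q_r)$ coincide); (iv) it satisfies the discrete energy inequality: there exists a numerical energy flux $\mathcal G(q_l,q_r)$ with $\mathcal G(q,q)=G(q)$ such that $E(q_i^{n+1})-E(q_i^n)+\frac{\Delta t}{\Delta x_i}\big(\mathcal G(q_i^n,q_{i+1}^n)-\mathcal G(q_{i-1}^n,q_i^n)\big)\le0$ for all $i$; (v) it satisfies the maximum principle on $s_{xx}$ and the minimum principle on $s_{zz}$: if for a constant $k>0$ one has $s_{xx}(q_i^n)\le k$ for all $i$ (resp. $s_{zz}(q_i^n)\ge k$ for all $i$), then $s_{xx}(q_i^{n+1})\le k$ (resp. $s_{zz}(q_i^{n+1})\ge k$) for all $i$; (vi) steady contact discontinuities where $u=0$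 and $P$ is constant are exactly resolved: if $u_i^n=0$ for all $i$ and $P(q_i^n)$ does not depend on $i$, then $q_i^{n+1}=q_i^n$ for all $i$; (vii) data with bounded propagation speeds give finite numerical propagation speed: there is an absolute constant $C$ such that $A(q_l,q_r)\le C(|u_l|+|u_r|+a_l+a_r)$ for all states $q_l,q_r$; (viii) the numerical viscosity is sharp: as $q_l,q_r$ tend to a common state $q$, the speeds $\Sigma_1,\Sigma_2,\Sigma_3$ tend respectively to the exact characteristic speeds $u-\sqrt{\partial_hP|_{\boldsymbol s}},\ u,\ u+\sqrt{\partial_hP|_{\boldsymbol s}}$ evaluated at $q$.
   Context: We consider the one-dimensional system for $h\ge0$, velocity $u$, and $\sigma_{xx},\sigma_{zz}>0$: $\partial_t h+\partial_x(hu)=0$, $\partial_t(hu)+\partial_x(hu^2+P)=0$, $\partial_t(h\sigma_{xx})+\partial_x(h\sigma_{xx}u)-2h\sigma_{xx}\partial_xu=0$, $\partial_t(h\sigma_{zz})+\partial_x(h\sigma_{zz}u)+2h\sigma_{zz}\partial_xu=0$, with $P=g\frac{h^2}{2}+\frac{\eta_p}{2\lambda}h(\sigma_{zz}-\sigma_{xx})$, constants $g,\eta_p,\lambda>0$. States $q=(h,hu,h\sigma_{xx},h\sigma_{zz})$ with $h>0,\sigma_{xx}>0,\sigma_{zz}>0$. Set $\boldsymbol s=(s_{xx},s_{zz})=(\sigma_{xx}^{-1/2}/h,\ \sigma_{zz}^{1/2}/h)$; then $\partial_hP|_{\boldsymbol s}=gh+\frac{\eta_p}{2\lambda}(3\sigma_{zz}+\sigma_{xx})$.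 Energy $E(q)=h\frac{u^2}{2}+g\frac{h^2}{2}+\frac{\eta_p}{4\lambda}h(\sigma_{xx}+\sigma_{zz}-\ln(\sigma_{xx}\sigma_{zz})-2)$, energy flux $G(q)=(E+P)u$. Relaxation speeds: for states $q_l,q_r$, $P_l=P(q_l)$, $P_r=P(q_r)$, $a_l=\sqrt{\partial_hP|_{\boldsymbol s}(q_l)}$, $a_r=\sqrt{\partial_hP|_{\boldsymbol s}(q_r)}$, $\frac{c_l}{h_l}=a_l+2\big(\max(0,u_l-u_r)+\frac{\max(0,P_r-P_l)}{h_la_l+h_ra_r}\big)$, $\frac{c_r}{h_r}=a_r+2\big(\max(0,u_l-u_r)+\frac{\max(0,P_l-P_r)}{h_la_l+h_ra_r}\big)$. Riemann solver: $\pi_l=P_l$, $\pi_r=P_r$, $u^*=\frac{c_lu_l+c_ru_r+\pi_l-\pi_r}{c_l+c_r}$, $\pi^*=\frac{c_r\pi_l+c_l\pi_r-c_lc_r(u_r-u_l)}{c_l+c_r}$, $\frac1{h_l^*}=\frac1{h_l}+\frac{c_r(u_r-u_l)+\pi_l-\pi_r}{c_l(c_l+c_r)}$, $\frac1{h_r^*}=\frac1{h_r}+\frac{c_l(u_r-u_l)+\pi_r-\pi_l}{c_r(c_l+c_r)}$, $\sigma_{xx,l}^*=\sigma_{xx,l}(h_l/h_l^* )^2$, $\sigma_{xx,r}^*=\sigma_{xx,r}(h_r/h_r^* )^2$, $\sigma_{zz,l}^*=\sigma_{zz,l}(h_l^*/h_l)^2$, $\sigma_{zz,r}^*=\sigma_{zz,r}(h_r^*/h_r)^2$;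 $q_l^*=(h_l^*,h_l^*u^*,h_l^*\sigma_{xx,l}^*,h_l^*\sigma_{zz,l}^* )$, $q_r^*$ similarly; speeds $\Sigma_1=u_l-c_l/h_l$, $\Sigma_2=u^*$, $\Sigma_3=u_r+c_r/h_r$. The self-similar approximate solution equals $q_l$ (with $\pi=\pi_l$) for $\xi<\Sigma_1$, $q_l^*$ (with $\pi=\pi^*$) on $(\Sigma_1,\Sigma_2)$, $q_r^*$ (with $\pi=\pi^*$) on $(\Sigma_2,\Sigma_3)$, $q_r$ (with $\pi=\pi_r$) for $\xi>\Sigma_3$. Numerical fluxes: $\mathcal F_l=(\mathcal F^h,\mathcal F^{hu},\mathcal F_l^{h\sigma_{xx}},\mathcal F_l^{h\sigma_{zz}})$, $\mathcal F_r=(\mathcal F^h,\mathcal F^{hu},\mathcal F_r^{h\sigma_{xx}},\mathcal F_r^{h\sigma_{zz}})$, where $\mathcal F^h=hu$ and $\mathcal F^{hu}=hu^2+\pi$ evaluated in the self-similar solution at $\xi=0$; and, for $w=h\sigma_{xx}$ (resp. $w=h\sigma_{zz}$), $\mathcal F_l^{w}=(wu)_l+\min(0,\Sigma_1)(w_l^*-w_l)+\min(0,\Sigma_2)(w_r^*-w_l^* )+\min(0,\Sigma_3)(w_r-w_r^* )$ and $\mathcal F_r^{w}=(wu)_r-\max(0,\Sigma_1)(w_l^*-w_l)-\max(0,\Sigma_2)(w_r^*-w_l^* )-\max(0,\Sigma_3)(w_r-w_r^* )$. Mesh: cells $(x_{i-1/2},x_{i+1/2})$, $i\in\mathbb Z$,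 $\Delta x_i=x_{i+1/2}-x_{i-1/2}$, time step $\Delta t$; $A(q_l,q_r)=\max(|\Sigma_1|,|\Sigma_2|,|\Sigma_3|)$. *)

From Stdlib Require Import Reals Lra ZArith.
Open Scope R_scope.

(* A state / 4-vector: components (h, hu, h*sigma_xx, h*sigma_zz). *)
Record st := St { sh : R; shu : R; shxx : R; shzz : R }.

Definition stadd (p q : st) : st :=
  St (sh p + sh q) (shu p + shu q) (shxx p + shxx q) (shzz p + shzz q).
Definition stsub (p q : st) : st :=
  St (sh p - sh q) (shu p - shu q) (shxx p - shxx q) (shzz p - shzz q).
Definition stscal (c : R) (p : st) : st :=
  St (c * sh p) (c * shu p) (c * shxx p) (c * shzz p).
Definition stnorm (p : st) : R :=
  Rmax (Rabs (sh p)) (Rmax (Rabs (shu p)) (Rmax (Rabs (shxx p)) (Rabs (shzz p)))).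
Definition stdist (p q : st) : R := stnorm (stsub p q).

Definition adm (q : st) : Prop := 0 < sh q /\ 0 < shxx q / sh q /\ 0 < shzz q / sh q.

Definition vel (q : st) : R := shu q / sh q.
Definition sigxx (q : st) : R := shxx q / sh q.
Definition sigzz (q : st) : R := shzz q / sh q.

Definition sxx (q : st) : R := / (sqrt (sigxx q) * sh q).
Definition szz (q : st) : R := sqrt (sigzz q) / sh q.

Section Model.
Variables g eta lam : R.

Definition Pr (q : st) : R :=
  g * sh q ^ 2 / 2 + eta / (2 * lam) * sh q * (sigzz q - sigxx q).
(* partial_h P at fixed s *)
Definition dPs (q : st) : R := g * sh q + eta / (2 * lam) * (3 * sigzz q + sigxx q).
Definition asp (q : st) : R := sqrt (dPs q).

Definition Energy (q : st) : R :=
  sh q * vel q ^ 2 / 2 + g * sh q ^ 2 / 2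
  + eta / (4 * lam) * sh q * (sigxx q + sigzz q - ln (sigxx q * sigzz q) - 2).
Definition Gflux (q : st) : R := (Energy q + Pr q) * vel q.

(* physical (conservative part) flux and nonconservative matrix B(q):
   the system reads  d_t q + d_x F(q) + B(q) d_x q = 0 with
   B(q) d_x q = (0, 0, -2 h sigma_xx d_x u, 2 h sigma_zz d_x u),
   h d_x u = d_x(hu) - u d_x h. *)
Definition Fphys (q : st) : st :=
  St (shu q) (shu q * vel q + Pr q) (shxx q * vel q) (shzz q * vel q).
Definition Bmat (q v : st) : st :=
  St 0 0 (-2 * sigxx q * (shu v - vel q * sh v)) (2 * sigzz q * (shu v - vel q * sh v)).

Definition cL (ql qr : st) : R :=
  sh ql * (asp ql + 2 * (Rmax 0 (vel ql - vel qr)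
     + Rmax 0 (Pr qr - Pr ql) / (sh ql * asp ql + sh qr * asp qr))).
Definition cR (ql qr : st) : R :=
  sh qr * (asp qr + 2 * (Rmax 0 (vel ql - vel qr)
     + Rmax 0 (Pr ql - Pr qr) / (sh ql * asp ql + sh qr * asp qr))).

Definition ustar (ql qr : st) : R :=
  (cL ql qr * vel ql + cR ql qr * vel qr + Pr ql - Pr qr) / (cL ql qr + cR ql qr).
Definition pistar (ql qr : st) : R :=
  (cR ql qr * Pr ql + cL ql qr * Pr qr - cL ql qr * cR ql qr * (vel qr - vel ql))
  / (cL ql qr + cR ql qr).
Definition hLstar (ql qr : st) : R :=
  / (/ sh ql + (cR ql qr * (vel qr - vel ql) + Pr ql - Pr qr)
               / (cL ql qr * (cL ql qr + cR ql qr))).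
Definition hRstar (ql qr : st) : R :=
  / (/ sh qr + (cL ql qr * (vel qr - vel ql) + Pr qr - Pr ql)
               / (cR ql qr * (cL ql qr + cR ql qr))).
Definition qLstar (ql qr : st) : st :=
  let hs := hLstar ql qr in
  St hs (hs * ustar ql qr)
     (hs * (sigxx ql * (sh ql / hs) ^ 2)) (hs * (sigzz ql * (hs / sh ql) ^ 2)).
Definition qRstar (ql qr : st) : st :=
  let hs := hRstar ql qr in
  St hs (hs * ustar ql qr)
     (hs * (sigxx qr * (sh qr / hs) ^ 2)) (hs * (sigzz qr * (hs / sh qr) ^ 2)).

Definition Sig1 (ql qr : st) : R := vel ql - cL ql qr / sh ql.
Definition Sig2 (ql qr : st) : R := ustar ql qr.
Definition Sig3 (ql qr : st) : R := vel qr + cR ql qr / sh qr.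

Definition Aspeed (ql qr : st) : R :=
  Rmax (Rabs (Sig1 ql qr)) (Rmax (Rabs (Sig2 ql qr)) (Rabs (Sig3 ql qr))).

(* value (state, pi) of the self-similar solution at xi = 0
   (at xi = Sigma_k exactly, the state on the right of the wave is taken;
   h u and h u^2 + pi are continuous across the waves, so this is immaterial) *)
Definition at0_state (ql qr : st) : st :=
  if Rlt_dec 0 (Sig1 ql qr) then ql
  else if Rlt_dec 0 (Sig2 ql qr) then qLstar ql qr
  else if Rlt_dec 0 (Sig3 ql qr) then qRstar ql qr
  else qr.
Definition at0_pi (ql qr : st) : R :=
  if Rlt_dec 0 (Sig1 ql qr) then Pr ql
  else if Rlt_dec 0 (Sig3 ql qr) then pistar ql qr
  else Pr qr.

Definition Fh (ql qr : st) : R := shu (at0_state ql qr).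
Definition Fhu (ql qr : st) : R :=
  shu (at0_state ql qr) * vel (at0_state ql qr) + at0_pi ql qr.

Definition FwL (w : st -> R) (ql qr : st) : R :=
  w ql * vel ql
  + Rmin 0 (Sig1 ql qr) * (w (qLstar ql qr) - w ql)
  + Rmin 0 (Sig2 ql qr) * (w (qRstar ql qr) - w (qLstar ql qr))
  + Rmin 0 (Sig3 ql qr) * (w qr - w (qRstar ql qr)).
Definition FwR (w : st -> R) (ql qr : st) : R :=
  w qr * vel qr
  - Rmax 0 (Sig1 ql qr) * (w (qLstar ql qr) - w ql)
  - Rmax 0 (Sig2 ql qr) * (w (qRstar ql qr) - w (qLstar ql qr))
  - Rmax 0 (Sig3 ql qr) * (w qr - w (qRstar ql qr)).

Definition FluxL (ql qr : st) : st :=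
  St (Fh ql qr) (Fhu ql qr) (FwL shxx ql qr) (FwL shzz ql qr).
Definition FluxR (ql qr : st) : st :=
  St (Fh ql qr) (Fhu ql qr) (FwR shxx ql qr) (FwR shzz ql qr).

Definition scheme (dt : R) (dx : Z -> R) (qn : Z -> st) (i : Z) : st :=
  stsub (qn i) (stscal (dt / dx i)
     (stsub (FluxL (qn i) (qn (i + 1)%Z)) (FluxR (qn (i - 1)%Z) (qn i)))).

Definition CFL (dt : R) (dx : Z -> R) (qn : Z -> st) : Prop :=
  forall i : Z, dt * Aspeed (qn i) (qn (i + 1)%Z) <= / 2 * Rmin (dx i) (dx (i + 1)%Z).

(* Consistency of the pair of numerical fluxes with the nonconservative
   system d_t q + d_x F(q) + B(q) d_x q = 0 (Bouchut's definition):
   F_l(q,q) = F_r(q,q) = F(q) and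
   F_r(q_l,q_r) - F_l(q_l,q_r) = - B(q)(q_r - q_l) + o(q_r - q_l)
   as q_l, q_r -> q. *)
Definition consistent : Prop :=
  forall q, adm q ->
    FluxL q q = Fphys q /\ FluxR q q = Fphys q /\
    forall eps, 0 < eps -> exists delta, 0 < delta /\
      forall ql qr, adm ql -> adm qr -> stdist ql q < delta -> stdist qr q < delta ->
        stnorm (stadd (stsub (FluxR ql qr) (FluxL ql qr)) (Bmat q (stsub qr ql)))
          <= eps * stdist qr ql.

End Model.

From Pilot Require Import Defs.
From Stdlib Require Import Reals Lra Psatz ZArith List.
Open Scope R_scope.

(* Under the half-CFL condition each new cell value is a convex combination
   of [q_(i-1)], [q_i], [q_(i+1)] and of the four intermediate states of the
   two Riemann problems at the cell interfaces.  The intermediate states are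
   admissible and keep [s_xx] and [s_zz]; positivity and the bounds on [s]
   follow because the admissible set and the sets [{s_xx <= k}],
   [{s_zz >= k}] are convex in the variables [q], and the energy inequality
   follows from the convexity of the energy (Jensen) together with the
   dissipation of energy across each outer wave.  That dissipation holds
   because [c_l], [c_r] satisfy the subcharacteristic condition at the
   intermediate states: with [c = h a (1 + 2 y)], the compression ratio of the
   wave is at least [(1 + y) / (1 + 2 y)], and this is what the factor 2 in the
   relaxation speeds pays for.  The right wave is the mirror image of the left
   one under [x -> -x], so only left waves are analysed. *)

Lemma ln_sub_le_div_sub_1 a b : 0 < a -> 0 < b -> ln a - ln b <= a / b - 1.
Proof.
  intros Ha Hb. assert (Hab : 0 < a / b) by (apply Rdiv_lt_0_compat; assumption).
  replace (ln a - ln b) with (ln (a / b))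
    by (unfold Rdiv; rewrite ln_mult, ln_Rinv by (try apply Rinv_0_lt_compat; assumption); ring).
  pose proof (exp_ineq1_le (ln (a / b))) as H. rewrite exp_ln in H by exact Hab. lra.
Qed.

Lemma Rmin0_add_Rmax0 s : Rmin 0 s + Rmax 0 s = s.
Proof.
  destruct (Rle_dec 0 s).
  - rewrite Rmin_left, Rmax_right; lra.
  - rewrite Rmin_right, Rmax_left; lra.
Qed.

Lemma Ropp_le_Rabs x : - x <= Rabs x.
Proof. rewrite <- Rabs_Ropp. apply RRle_abs. Qed.

Lemma neg_Rmin0_le_Rabs s : - Rmin 0 s <= Rabs s.
Proof. unfold Rmin, Rabs. destruct (Rle_dec 0 s), (Rcase_abs s); lra. Qed.

Lemma Rmax0_le_Rabs s : Rmax 0 s <= Rabs s.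
Proof. unfold Rmax, Rabs. destruct (Rle_dec 0 s), (Rcase_abs s); lra. Qed.

Lemma cfl_fraction_le dt d d' x A :
  0 < d -> x <= A -> dt * A <= / 2 * d' -> d' <= d -> 0 <= dt -> dt / d * x <= / 2.
Proof.
  intros Hd Hx HA Hd' Hdt.
  apply (Rmult_le_reg_r d); [exact Hd|].
  replace (dt / d * x * d) with (dt * x) by (field; lra). nra.
Qed.

(** * Single relaxation waves *)

Definition energy_of (g k h u sx sz : R) : R :=
  h * u ^ 2 / 2 + g * h ^ 2 / 2 + k * h * (sx + sz - ln (sx * sz) - 2).

(** A left-facing relaxation wave of Lagrangian speed [c] joins [(h, u)] to
    [(hs, us)]; its speed is [u - c / h] and the relaxed pressure jumps by
    [- c (us - u)]. *)
Section LeftWave.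
Variables h u hs us c : R.
Hypotheses (Hh : 0 < h) (Hhs : 0 < hs) (Hc : 0 < c) (Hjump : / hs = / h + (us - u) / c).

Lemma wave_ustar : us = u + c * (/ hs - / h).
Proof. rewrite Hjump. field. lra. Qed.

Lemma wave_mass : hs * us - h * u = (u - c / h) * (hs - h).
Proof. rewrite wave_ustar. field. lra. Qed.

Lemma wave_momentum :
  hs * us * us - c * (us - u) - h * u * u = (u - c / h) * (hs * us - h * u).
Proof. rewrite wave_ustar. field. lra. Qed.

Lemma wave_transport_xx X :
  X * h / hs * us - X * u - (u - c / h) * (X * h / hs - X) = X * (h / hs + 1) * (us - u).
Proof. rewrite wave_ustar. field. lra. Qed.

Lemma wave_transport_zz Z :
  Z * (hs / h) ^ 3 * us - Z * u - (u - c / h) * (Z * (hs / h) ^ 3 - Z)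
  = - (Z * (h / hs + 1) / (h / hs) ^ 2) * (us - u).
Proof. rewrite wave_ustar. field. lra. Qed.

(* The stretchings [sx (h/hs)^2] and [sz (hs/h)^2] keep [sx sz], so the logarithms cancel. *)
Lemma wave_energy_dissipation g k sx sz : 0 < sx -> 0 < sz ->
  let S := u - c / h in
  let P := g * h ^ 2 / 2 + 2 * k * h * (sz - sx) in
  let E := energy_of g k h u sx sz in
  let Es := energy_of g k hs us (sx * (h / hs) ^ 2) (sz * (hs / h) ^ 2) in
  let t := h / hs in
  S * (Es - E) - ((Es + (P - c * (us - u))) * us - (E + P) * u)
  = c * (t - 1) ^ 2 / 2
    * (c ^ 2 / h ^ 2 - g * h / t - 2 * k * sx - 2 * k * sz * (1 + 2 * t) / t ^ 2).
Proof.
  intros Hx Hz S P E Es t.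
  assert (Eln : ln (sx * (h / hs) ^ 2 * (sz * (hs / h) ^ 2)) = ln (sx * sz)).
  { f_equal. field. lra. }
  subst S P E Es t. unfold energy_of. rewrite Eln, wave_ustar. field. lra.
Qed.
End LeftWave.

(* With [c = h a (1 + 2 y)], [a ^ 2 = G + 3 Z + X] and [t = h / hs], this is the
   nonnegativity of the bracket in [wave_energy_dissipation]. *)
Lemma subcharacteristic_bound G X Z y t :
  0 <= G -> 0 <= X -> 0 <= Z -> 0 <= y -> 1 + y <= t * (1 + 2 * y) ->
  G / t + X + Z * (1 + 2 * t) / t ^ 2 <= (G + 3 * Z + X) * (1 + 2 * y) ^ 2.
Proof.
  intros HG HX HZ Hy Ht.
  assert (Htpos : 0 < t) by nra.
  assert (Hts : t <= t * (1 + 2 * y)) by nra.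
  set (s := t * (1 + 2 * y)) in *.
  assert (Hs1 : 1 <= s) by lra.
  assert (K1 : t <= s ^ 2) by nra.
  assert (K2 : t ^ 2 <= s ^ 2) by nra.
  assert (K3 : 1 + 2 * t <= 3 * s ^ 2) by nra.
  assert (K : G * t + X * t ^ 2 + Z * (1 + 2 * t) <= (G + 3 * Z + X) * s ^ 2) by nra.
  replace (G / t + X + Z * (1 + 2 * t) / t ^ 2)
    with ((G * t + X * t ^ 2 + Z * (1 + 2 * t)) / t ^ 2) by (field; lra).
  replace ((G + 3 * Z + X) * (1 + 2 * y) ^ 2) with ((G + 3 * Z + X) * s ^ 2 / t ^ 2)
    by (unfold s; field; lra).
  unfold Rdiv. apply Rmult_le_compat_r; [|exact K].
  left. apply Rinv_0_lt_compat. nra.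
Qed.

(** * Admissible states and the reflection [x -> -x] *)

Lemma adm_h q : adm q -> 0 < sh q.
Proof. intros [H _]; exact H. Qed.
Lemma adm_h_neq0 q : adm q -> sh q <> 0.
Proof. intros Hq. pose proof (adm_h q Hq). lra. Qed.
Lemma adm_sigxx q : adm q -> 0 < sigxx q.
Proof. intros [_ [H _]]; exact H. Qed.
Lemma adm_sigzz q : adm q -> 0 < sigzz q.
Proof. intros [_ [_ H]]; exact H. Qed.

Lemma shu_eq q : adm q -> shu q = sh q * vel q.
Proof. intros Hq. pose proof (adm_h q Hq). unfold vel. field. lra. Qed.
Lemma shxx_eq q : adm q -> shxx q = sh q * sigxx q.
Proof. intros Hq. pose proof (adm_h q Hq). unfold sigxx. field. lra. Qed.
Lemma shzz_eq q : adm q -> shzz q = sh q * sigzz q.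
Proof. intros Hq. pose proof (adm_h q Hq). unfold sigzz. field. lra. Qed.

Lemma adm_shxx q : adm q -> 0 < shxx q.
Proof. intros Hq. rewrite shxx_eq by exact Hq. pose proof (adm_h q Hq). pose proof (adm_sigxx q Hq). nra. Qed.
Lemma adm_shzz q : adm q -> 0 < shzz q.
Proof. intros Hq. rewrite shzz_eq by exact Hq. pose proof (adm_h q Hq). pose proof (adm_sigzz q Hq). nra. Qed.

Lemma sxx_le_iff q k : adm q -> 0 < k -> (sxx q <= k <-> / (k * k) <= shxx q * sh q).
Proof.
  intros Hq Hk. pose proof (adm_h _ Hq) as Hh. pose proof (adm_sigxx _ Hq) as Hx.
  set (r := sqrt (sigxx q) * sh q).
  assert (Hr : 0 < r) by (apply Rmult_lt_0_compat; [apply sqrt_lt_R0|]; assumption).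
  assert (E : shxx q * sh q = r * r).
  { unfold r. replace (sqrt (sigxx q) * sh q * (sqrt (sigxx q) * sh q))
      with (sqrt (sigxx q) * sqrt (sigxx q) * sh q * sh q) by ring.
    rewrite sqrt_sqrt by lra. unfold sigxx. field. lra. }
  unfold sxx. fold r. rewrite E, Rinv_mult.
  assert (Hk' : 0 < / k) by (apply Rinv_0_lt_compat; exact Hk).
  split; intros Hle.
  - assert (/ k <= r).
    { rewrite <- (Rinv_inv r). apply Rinv_le_contravar; [apply Rinv_0_lt_compat|]; assumption. }
    apply Rmult_le_compat; lra.
  - rewrite <- (Rinv_inv k). apply Rinv_le_contravar; [exact Hk'|]. nra.
Qed.

Lemma szz_ge_iff q k : adm q -> 0 < k -> (k <= szz q <-> k * k <= shzz q / sh q ^ 3).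
Proof.
  intros Hq Hk. pose proof (adm_h _ Hq) as Hh. pose proof (adm_sigzz _ Hq) as Hz.
  assert (Hr : 0 < szz q) by (apply Rdiv_lt_0_compat; [apply sqrt_lt_R0|]; assumption).
  assert (E : shzz q / sh q ^ 3 = szz q * szz q).
  { unfold szz. replace (sqrt (sigzz q) / sh q * (sqrt (sigzz q) / sh q))
      with (sqrt (sigzz q) * sqrt (sigzz q) / (sh q * sh q)) by (field; lra).
    rewrite sqrt_sqrt by lra. unfold sigzz. field. lra. }
  rewrite E. split; intros; nra.
Qed.

(* The reflection [x -> -x]; [adm], [sigxx], [sigzz] and hence [Pr], [asp]
   are invariant under it by mere conversion. *)
Definition mirror (q : st) : st := St (sh q) (- shu q) (shxx q) (shzz q).

Lemma mirror_involutive q : mirror (mirror q) = q.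
Proof. destruct q. unfold mirror. simpl. rewrite Ropp_involutive. reflexivity. Qed.

Lemma vel_mirror q : vel (mirror q) = - vel q.
Proof. unfold vel, Rdiv. simpl. ring. Qed.

(** * Convex combinations of states *)

Fixpoint wsum (L : list (R * st)) (phi : st -> R) : R :=
  match L with
  | nil => 0
  | (w, q) :: L' => w * phi q + wsum L' phi
  end.

Definition wtot (L : list (R * st)) : R := wsum L (fun _ => 1).

Definition wmean (L : list (R * st)) : st :=
  St (wsum L sh) (wsum L shu) (wsum L shxx) (wsum L shzz).

Definition adm_weights (L : list (R * st)) : Prop :=
  forall w q, In (w, q) L -> 0 <= w /\ adm q.

Definition affine (f : st -> R) : Prop :=
  exists a0 a1 a2 a3 a4, forall q, f q = a0 + a1 * sh q + a2 * shu q + a3 * shxx q + a4 * shzz q.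

Lemma wsum_le L phi psi :
  (forall w q, In (w, q) L -> 0 <= w /\ phi q <= psi q) -> wsum L phi <= wsum L psi.
Proof.
  induction L as [|[w q] L IH]; cbn [wsum]; intros H; [lra|].
  destruct (H w q (or_introl eq_refl)) as [Hw Hq].
  assert (wsum L phi <= wsum L psi) by (apply IH; intros; apply H; right; assumption).
  nra.
Qed.

Lemma wsum_pos L phi :
  adm_weights L -> 0 < wtot L -> (forall q, adm q -> 0 < phi q) -> 0 < wsum L phi.
Proof.
  unfold wtot. induction L as [|[w q] L IH]; cbn [wsum]; intros HL Ht Hphi; [lra|].
  destruct (HL w q (or_introl eq_refl)) as [Hw Hq].
  assert (HL' : adm_weights L) by (intros w' q' Hin; apply HL; right; exact Hin).
  assert (Hrest : 0 <= wsum L phi).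
  { replace 0 with (wsum L (fun _ => 0)) by (clear; induction L as [|[] L IH]; cbn [wsum]; lra).
    apply wsum_le. intros w' q' Hin. destruct (HL' w' q' Hin). split; [|left; apply Hphi]; assumption. }
  pose proof (Hphi q Hq). destruct Hw as [Hw|Hw].
  - nra.
  - subst w. specialize (IH HL' ltac:(lra) Hphi). lra.
Qed.

Lemma wmean_adm L : adm_weights L -> wtot L = 1 -> adm (wmean L).
Proof.
  intros HL Ht. assert (Ht' : 0 < wtot L) by lra.
  assert (Hh : 0 < wsum L sh) by (apply wsum_pos; [exact HL | exact Ht' | exact adm_h]).
  split; [exact Hh|]. unfold sigxx, sigzz. cbn [wmean sh shxx shzz].
  split; apply Rdiv_lt_0_compat; try exact Hh; apply wsum_pos; try assumption.
  - exact adm_shxx.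
  - exact adm_shzz.
Qed.

Lemma wsum_affine L f : affine f -> wtot L = 1 -> wsum L f = f (wmean L).
Proof.
  intros [a0 [a1 [a2 [a3 [a4 Hf]]]]] Ht.
  transitivity (a0 * wtot L + a1 * wsum L sh + a2 * wsum L shu + a3 * wsum L shxx + a4 * wsum L shzz).
  - unfold wtot. clear Ht. induction L as [|[w q] L IH]; cbn [wsum]; [ring|]. rewrite Hf, IH. ring.
  - rewrite Ht, Hf. cbn [wmean sh shu shxx shzz]. ring.
Qed.

(** Jensen's inequality, through an affine minorant. *)
Lemma affine_le_wsum L f phi :
  wtot L = 1 -> affine f -> (forall w q, In (w, q) L -> 0 <= w /\ f q <= phi q) ->
  f (wmean L) <= wsum L phi.
Proof. intros Ht Hf H. rewrite <- wsum_affine by assumption. apply wsum_le, H. Qed.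

(* [shxx * sh >= c] is convex in [(h, h sigma_xx)] since [c / h] is convex;
   the tangent of [c / h] at the mean depth is the affine minorant. *)
Lemma wmean_shxx_mul_sh_ge L c : adm_weights L -> wtot L = 1 -> 0 < c ->
  (forall w q, In (w, q) L -> c <= shxx q * sh q) -> c <= shxx (wmean L) * sh (wmean L).
Proof.
  intros HL Ht Hc H. pose proof (adm_h _ (wmean_adm L HL Ht)) as Hm.
  set (hb := sh (wmean L)) in *.
  assert (Hf : affine (fun q => 2 * c / hb - c / hb ^ 2 * sh q)).
  { exists (2 * c / hb), (- (c / hb ^ 2)), 0, 0, 0. intros q. ring. }
  pose proof (affine_le_wsum L _ shxx Ht Hf) as J. cbn beta in J.
  assert (E : 2 * c / hb - c / hb ^ 2 * hb = c / hb) by (field; lra).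
  change (sh (wmean L)) with hb in J. rewrite E in J.
  assert (Hmean : c / hb <= shxx (wmean L)).
  { apply J. intros w q Hin. destruct (HL w q Hin) as [Hw Hq]. split; [exact Hw|].
    pose proof (H w q Hin). pose proof (adm_h _ Hq).
    assert (c / sh q <= shxx q).
    { apply (Rmult_le_reg_r (sh q)); [lra|]. unfold Rdiv. rewrite Rmult_assoc, Rinv_l by lra. lra. }
    assert (c / sh q - (2 * c / hb - c / hb ^ 2 * sh q) = c * (sh q - hb) ^ 2 / (sh q * hb ^ 2))
      by (field; lra).
    assert (0 <= c * (sh q - hb) ^ 2 / (sh q * hb ^ 2)).
    { unfold Rdiv. apply Rmult_le_pos; [apply Rmult_le_pos; [lra | apply pow2_ge_0]|].
      left. apply Rinv_0_lt_compat, Rmult_lt_0_compat; [|apply pow_lt]; assumption. }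
    lra. }
  apply (Rmult_le_compat_r hb) in Hmean; [|lra].
  unfold Rdiv in Hmean. rewrite Rmult_assoc, Rinv_l, Rmult_1_r in Hmean by lra. exact Hmean.
Qed.

Lemma wmean_shzz_div_sh3_ge L c : adm_weights L -> wtot L = 1 -> 0 < c ->
  (forall w q, In (w, q) L -> c <= shzz q / sh q ^ 3) -> c <= shzz (wmean L) / sh (wmean L) ^ 3.
Proof.
  intros HL Ht Hc H. pose proof (adm_h _ (wmean_adm L HL Ht)) as Hm.
  set (hb := sh (wmean L)) in *.
  assert (Hf : affine (fun q => - 2 * c * hb ^ 3 + 3 * c * hb ^ 2 * sh q)).
  { exists (- 2 * c * hb ^ 3), (3 * c * hb ^ 2), 0, 0, 0. intros q. ring. }
  pose proof (affine_le_wsum L _ shzz Ht Hf) as J. cbn beta in J.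
  change (sh (wmean L)) with hb in J.
  replace (- 2 * c * hb ^ 3 + 3 * c * hb ^ 2 * hb) with (c * hb ^ 3) in J by ring.
  assert (Hmean : c * hb ^ 3 <= shzz (wmean L)).
  { apply J. intros w q Hin. destruct (HL w q Hin) as [Hw Hq]. split; [exact Hw|].
    pose proof (H w q Hin) as Hq3. pose proof (adm_h _ Hq).
    assert (0 < sh q ^ 3) by (apply pow_lt; lra).
    assert (c * sh q ^ 3 <= shzz q).
    { apply (Rmult_le_compat_r (sh q ^ 3)) in Hq3; [|lra].
      unfold Rdiv in Hq3. rewrite Rmult_assoc, Rinv_l, Rmult_1_r in Hq3 by lra. exact Hq3. }
    assert (0 <= c * (sh q - hb) ^ 2 * (sh q + 2 * hb)).
    { apply Rmult_le_pos; [apply Rmult_le_pos; [lra | apply pow2_ge_0] | lra]. }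
    nra. }
  assert (0 < hb ^ 3) by (apply pow_lt; lra).
  apply (Rmult_le_reg_r (hb ^ 3)); [lra|].
  unfold Rdiv. rewrite Rmult_assoc, Rinv_l, Rmult_1_r by lra. exact Hmean.
Qed.

(** * Limits at a diagonal pair of states *)

Lemma Rabs_comp_le_stnorm p :
  Rabs (sh p) <= stnorm p /\ Rabs (shu p) <= stnorm p /\
  Rabs (shxx p) <= stnorm p /\ Rabs (shzz p) <= stnorm p.
Proof.
  unfold stnorm.
  pose proof (Rmax_l (Rabs (sh p)) (Rmax (Rabs (shu p)) (Rmax (Rabs (shxx p)) (Rabs (shzz p))))).
  pose proof (Rmax_r (Rabs (sh p)) (Rmax (Rabs (shu p)) (Rmax (Rabs (shxx p)) (Rabs (shzz p))))).
  pose proof (Rmax_l (Rabs (shu p)) (Rmax (Rabs (shxx p)) (Rabs (shzz p)))).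
  pose proof (Rmax_r (Rabs (shu p)) (Rmax (Rabs (shxx p)) (Rabs (shzz p)))).
  pose proof (Rmax_l (Rabs (shxx p)) (Rabs (shzz p))).
  pose proof (Rmax_r (Rabs (shxx p)) (Rabs (shzz p))). lra.
Qed.

Lemma stdist_nonneg a b : 0 <= stdist a b.
Proof. pose proof (Rabs_comp_le_stnorm (stsub a b)). pose proof (Rabs_pos (sh (stsub a b))). unfold stdist. lra. Qed.

Lemma stdist_sym a b : stdist a b = stdist b a.
Proof.
  unfold stdist, stnorm, stsub. cbn [sh shu shxx shzz].
  rewrite (Rabs_minus_sym (sh a)), (Rabs_minus_sym (shu a)), (Rabs_minus_sym (shxx a)),
    (Rabs_minus_sym (shzz a)).
  reflexivity.
Qed.

Lemma stdist_mirror a b : stdist (mirror a) (mirror b) = stdist a b.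
Proof.
  unfold stdist, stnorm, stsub, mirror. cbn [sh shu shxx shzz].
  replace (- shu a - - shu b) with (- (shu a - shu b)) by ring. rewrite Rabs_Ropp. reflexivity.
Qed.

Definition near (q : st) (P : st -> st -> Prop) : Prop :=
  exists d, 0 < d /\ forall ql qr, adm ql -> adm qr -> stdist ql q < d -> stdist qr q < d -> P ql qr.

Lemma near_and q P Q : near q P -> near q Q -> near q (fun a b => P a b /\ Q a b).
Proof.
  intros [d1 [H1 K1]] [d2 [H2 K2]]. exists (Rmin d1 d2). split; [apply Rmin_pos; assumption|].
  intros ql qr Hl Hr Dl Dr. pose proof (Rmin_l d1 d2). pose proof (Rmin_r d1 d2).
  split; [apply K1 | apply K2]; auto; lra.
Qed.

Lemma near_impl q (P Q : st -> st -> Prop) :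
  near q P -> (forall a b, adm a -> adm b -> P a b -> Q a b) -> near q Q.
Proof. intros [d [Hd K]] HPQ. exists d. split; [exact Hd|]. intros; apply HPQ; auto. Qed.

Lemma near_swap q P : near q P -> near q (fun a b => P b a).
Proof. intros [d [Hd K]]. exists d. split; [exact Hd|]. intros; apply K; auto. Qed.

Lemma near_mirror q P : near (mirror q) P -> near q (fun a b => P (mirror b) (mirror a)).
Proof.
  intros [d [Hd K]]. exists d. split; [exact Hd|].
  intros ql qr Hl Hr Dl Dr. apply K; [exact Hr | exact Hl | |]; rewrite stdist_mirror; assumption.
Qed.

Definition cont_at (q : st) (f : st -> st -> R) : Prop :=
  forall eps, 0 < eps -> near q (fun a b => Rabs (f a b - f q q) < eps).

Lemma cont_ext q f f' :
  (forall a b, adm a -> adm b -> f a b = f' a b) -> adm q -> cont_at q f' -> cont_at q f.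
Proof.
  intros E Hq C eps He. apply (near_impl q _ _ (C eps He)). intros a b Ha Hb H.
  rewrite !E; assumption.
Qed.

Lemma cont_const q c : cont_at q (fun _ _ => c).
Proof.
  intros eps He. exists 1. split; [lra|]. intros. rewrite Rminus_diag_eq, Rabs_R0 by reflexivity. exact He.
Qed.

Lemma cont_left q (comp : st -> R) : (forall p, Rabs (comp p) <= stnorm p) ->
  (forall a b, comp (stsub a b) = comp a - comp b) -> cont_at q (fun a _ => comp a).
Proof.
  intros Hc Hs eps He. exists eps. split; [exact He|]. intros ql qr _ _ Dl _.
  rewrite <- Hs. eapply Rle_lt_trans; [apply Hc | exact Dl].
Qed.

Lemma cont_swap q f : cont_at q f -> cont_at q (fun a b => f b a).
Proof. intros C eps He. apply (near_swap q _ (C eps He)). Qed.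

Lemma cont_mirror q f : cont_at (mirror q) f -> cont_at q (fun a b => f (mirror b) (mirror a)).
Proof. intros C eps He. apply (near_mirror q _ (C eps He)). Qed.

Lemma cont_sh q : cont_at q (fun a _ => sh a).
Proof. apply cont_left; [apply Rabs_comp_le_stnorm | reflexivity]. Qed.
Lemma cont_shu q : cont_at q (fun a _ => shu a).
Proof. apply cont_left; [apply Rabs_comp_le_stnorm | reflexivity]. Qed.
Lemma cont_shxx q : cont_at q (fun a _ => shxx a).
Proof. apply cont_left; [apply Rabs_comp_le_stnorm | reflexivity]. Qed.
Lemma cont_shzz q : cont_at q (fun a _ => shzz a).
Proof. apply cont_left; [apply Rabs_comp_le_stnorm | reflexivity]. Qed.

Lemma cont_plus q f f' : cont_at q f -> cont_at q f' -> cont_at q (fun a b => f a b + f' a b).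
Proof.
  intros F F' eps He.
  apply (near_impl q _ _ (near_and _ _ _ (F (eps / 2) ltac:(lra)) (F' (eps / 2) ltac:(lra)))).
  intros a b _ _ [H1 H2].
  replace (f a b + f' a b - (f q q + f' q q)) with ((f a b - f q q) + (f' a b - f' q q)) by ring.
  eapply Rle_lt_trans; [apply Rabs_triang | lra].
Qed.

Lemma cont_mult q f f' : cont_at q f -> cont_at q f' -> cont_at q (fun a b => f a b * f' a b).
Proof.
  intros F F' eps He. set (x := f q q). set (y := f' q q).
  set (M := Rabs x + Rabs y + 1).
  assert (HM : 0 < M) by (pose proof (Rabs_pos x); pose proof (Rabs_pos y); unfold M; lra).
  set (d := Rmin 1 (eps / (2 * M))).
  assert (Hd : 0 < d) by (apply Rmin_pos; [lra | apply Rdiv_lt_0_compat; lra]).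
  assert (Hd1 : d <= 1) by apply Rmin_l.
  assert (HdM : d * (2 * M) <= eps).
  { pose proof (Rmin_r 1 (eps / (2 * M))) as H. fold d in H.
    apply (Rmult_le_compat_r (2 * M)) in H; [|lra].
    unfold Rdiv in H. rewrite Rmult_assoc, Rinv_l, Rmult_1_r in H by lra. exact H. }
  apply (near_impl q _ _ (near_and _ _ _ (F d Hd) (F' d Hd))). intros a b _ _ [H1 H2].
  fold x y in H1, H2.
  replace (f a b * f' a b - x * y) with ((f a b - x) * f' a b + x * (f' a b - y)) by ring.
  eapply Rle_lt_trans; [apply Rabs_triang|]. rewrite !Rabs_mult.
  assert (Rabs (f' a b) <= Rabs y + 1).
  { replace (f' a b) with (y + (f' a b - y)) by ring. eapply Rle_trans; [apply Rabs_triang | lra]. }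
  pose proof (Rabs_pos (f a b - x)). pose proof (Rabs_pos x). pose proof (Rabs_pos (f' a b)).
  assert (Rabs (f a b - x) * Rabs (f' a b) <= d * (Rabs y + 1)) by (apply Rmult_le_compat; lra).
  assert (Rabs x * Rabs (f' a b - y) < Rabs x * d + d).
  { pose proof (Rabs_pos (f' a b - y)). nra. }
  unfold M in HdM. nra.
Qed.

Lemma cont_pow2 q f : cont_at q f -> cont_at q (fun a b => f a b ^ 2).
Proof.
  intros F eps He. apply (near_impl q _ _ (cont_mult q f f F F eps He)). intros a b _ _ H.
  replace (f a b ^ 2 - f q q ^ 2) with (f a b * f a b - f q q * f q q) by ring. exact H.
Qed.

Lemma cont_comp q f (phi : R -> R) :
  continuity_pt phi (f q q) -> cont_at q f -> cont_at q (fun a b => phi (f a b)).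
Proof.
  intros C F eps He. destruct (C eps He) as [d [Hd K]].
  apply (near_impl q _ _ (F d Hd)). intros a b _ _ H.
  destruct (Req_dec (f a b) (f q q)) as [E|E].
  - rewrite E, Rminus_diag_eq, Rabs_R0 by reflexivity. exact He.
  - apply (K (f a b)). split; [split; [constructor | auto] | exact H].
Qed.

Lemma continuity_pt_Rmax0 x : continuity_pt (fun t => Rmax 0 t) x.
Proof.
  intros eps He. exists eps. split; [exact He|]. intros t [_ Ht]. cbn in *. unfold R_dist in *.
  eapply Rle_lt_trans; [|exact Ht].
  unfold Rmax. destruct (Rle_dec 0 t), (Rle_dec 0 x); unfold Rabs; repeat destruct Rcase_abs; lra.
Qed.

Lemma cont_opp q f : cont_at q f -> cont_at q (fun a b => - f a b).
Proof.
  apply (cont_comp q f Ropp). apply (continuity_pt_opp id).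
  apply derivable_continuous_pt, derivable_pt_id.
Qed.

Lemma cont_minus q f f' : cont_at q f -> cont_at q f' -> cont_at q (fun a b => f a b - f' a b).
Proof. intros. apply cont_plus; [|apply cont_opp]; assumption. Qed.

Lemma cont_inv q f : f q q <> 0 -> cont_at q f -> cont_at q (fun a b => / f a b).
Proof.
  intros Hf. apply (cont_comp q f Rinv). apply (continuity_pt_inv id); [|exact Hf].
  apply derivable_continuous_pt, derivable_pt_id.
Qed.

Lemma cont_div q f f' : f' q q <> 0 -> cont_at q f -> cont_at q f' -> cont_at q (fun a b => f a b / f' a b).
Proof. intros. apply cont_mult; [|apply cont_inv]; assumption. Qed.

Lemma cont_sqrt q f : 0 <= f q q -> cont_at q f -> cont_at q (fun a b => sqrt (f a b)).
Proof. intros Hf. apply (cont_comp q f sqrt), continuity_pt_sqrt, Hf. Qed.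

Lemma cont_Rmax0 q f : cont_at q f -> cont_at q (fun a b => Rmax 0 (f a b)).
Proof. apply (cont_comp q f (fun t => Rmax 0 t)), continuity_pt_Rmax0. Qed.

Ltac cont_with atoms :=
  repeat match goal with
  | |- cont_at _ (fun _ _ => ?c) => apply cont_const
  | |- cont_at _ (fun a _ => sh a) => apply cont_sh
  | |- cont_at _ (fun a _ => shu a) => apply cont_shu
  | |- cont_at _ (fun a _ => shxx a) => apply cont_shxx
  | |- cont_at _ (fun a _ => shzz a) => apply cont_shzz
  | |- cont_at _ (fun a b => @?f a b + @?f' a b) => apply (cont_plus _ f f')
  | |- cont_at _ (fun a b => @?f a b - @?f' a b) => apply (cont_minus _ f f')
  | |- cont_at _ (fun a b => @?f a b * @?f' a b) => apply (cont_mult _ f f')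
  | |- cont_at _ (fun a b => - @?f a b) => apply (cont_opp _ f)
  | |- cont_at _ (fun a b => Rmax 0 (@?f a b)) => apply (cont_Rmax0 _ f)
  | |- cont_at _ (fun a b => @?f a b / @?f' a b) => apply (cont_div _ f f')
  | |- cont_at _ (fun a b => / @?f a b) => apply (cont_inv _ f)
  | |- cont_at _ (fun a b => @?f a b ^ 2) => apply (cont_pow2 _ f)
  | |- cont_at _ (fun _ b => sh b) => apply (cont_swap _ (fun a _ => sh a)), cont_sh
  | |- cont_at _ (fun _ b => shxx b) => apply (cont_swap _ (fun a _ => shxx a)), cont_shxx
  | |- cont_at _ (fun _ b => shzz b) => apply (cont_swap _ (fun a _ => shzz a)), cont_shzz
  | |- cont_at _ _ => atoms
  end.

Ltac cont_tac := cont_with fail.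

(** [O] and [o] of [stdist qr ql] as [ql] and [qr] tend to [q]. *)
Definition lip_at (q : st) (f : st -> st -> R) : Prop :=
  exists L, 0 <= L /\ near q (fun a b => Rabs (f a b) <= L * stdist b a).

Definition small_at (q : st) (f : st -> st -> R) : Prop :=
  forall eps, 0 < eps -> near q (fun a b => Rabs (f a b) <= eps * stdist b a).

Lemma lip_ext q f f' : (forall a b, adm a -> adm b -> f a b = f' a b) -> lip_at q f' -> lip_at q f.
Proof.
  intros E [L [HL F]]. exists L. split; [exact HL|].
  apply (near_impl q _ _ F). intros a b Ha Hb H. rewrite E; assumption.
Qed.

Lemma lip_plus q f f' : lip_at q f -> lip_at q f' -> lip_at q (fun a b => f a b + f' a b).
Proof.
  intros [L [HL F]] [L' [HL' F']]. exists (L + L'). split; [lra|].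
  apply (near_impl q _ _ (near_and _ _ _ F F')). intros a b _ _ [H H'].
  eapply Rle_trans; [apply Rabs_triang | lra].
Qed.

Lemma cont_bounded q f : cont_at q f -> exists M, 0 <= M /\ near q (fun a b => Rabs (f a b) <= M).
Proof.
  intros F. exists (Rabs (f q q) + 1). split; [pose proof (Rabs_pos (f q q)); lra|].
  apply (near_impl q _ _ (F 1 ltac:(lra))). intros a b _ _ H.
  replace (f a b) with (f q q + (f a b - f q q)) by ring.
  eapply Rle_trans; [apply Rabs_triang | lra].
Qed.

Lemma lip_mult q c f : cont_at q c -> lip_at q f -> lip_at q (fun a b => c a b * f a b).
Proof.
  intros C [L [HL F]]. destruct (cont_bounded q c C) as [M [HM B]].
  exists (M * L). split; [nra|].
  apply (near_impl q _ _ (near_and _ _ _ B F)). intros a b _ _ [K1 K2].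
  rewrite Rabs_mult. pose proof (Rabs_pos (c a b)). pose proof (Rabs_pos (f a b)).
  pose proof (stdist_nonneg b a).
  assert (Rabs (c a b) * Rabs (f a b) <= M * (L * stdist b a)) by (apply Rmult_le_compat; lra).
  lra.
Qed.

Lemma lip_jump q (comp : st -> R) : (forall p, Rabs (comp p) <= stnorm p) ->
  (forall a b, comp (stsub a b) = comp a - comp b) -> lip_at q (fun a b => comp b - comp a).
Proof.
  intros Hc Hs. exists 1. split; [lra|]. exists 1. split; [lra|]. intros a b _ _ _ _.
  rewrite <- Hs, Rmult_1_l. apply Hc.
Qed.

Lemma lip_mirror q f : lip_at (mirror q) f -> lip_at q (fun a b => f (mirror b) (mirror a)).
Proof.
  intros [L [HL F]]. exists L. split; [exact HL|].
  apply (near_impl q _ _ (near_mirror q _ F)). intros a b _ _ H.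
  rewrite stdist_mirror, stdist_sym in H. exact H.
Qed.

Lemma small_ext q f f' : (forall a b, adm a -> adm b -> f a b = f' a b) -> small_at q f' -> small_at q f.
Proof.
  intros E F eps He. apply (near_impl q _ _ (F eps He)). intros a b Ha Hb H. rewrite E; assumption.
Qed.

Lemma small_plus q f f' : small_at q f -> small_at q f' -> small_at q (fun a b => f a b + f' a b).
Proof.
  intros F F' eps He.
  apply (near_impl q _ _ (near_and _ _ _ (F (eps / 2) ltac:(lra)) (F' (eps / 2) ltac:(lra)))).
  intros a b _ _ [H1 H2]. eapply Rle_trans; [apply Rabs_triang | lra].
Qed.

Lemma small_mult q c f : cont_at q c -> c q q = 0 -> lip_at q f -> small_at q (fun a b => c a b * f a b).
Proof.
  intros C C0 [L [HL F]] eps He.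
  set (e := eps / (L + 1)).
  assert (He' : 0 < e) by (apply Rdiv_lt_0_compat; lra).
  assert (HeL : e * L <= eps).
  { unfold e. apply (Rmult_le_reg_r (L + 1)); [lra|].
    replace (eps / (L + 1) * L * (L + 1)) with (eps * L) by (field; lra). nra. }
  apply (near_impl q _ _ (near_and _ _ _ (C e He') F)). intros a b _ _ [H1 H2].
  rewrite C0, Rminus_0_r in H1. rewrite Rabs_mult.
  pose proof (stdist_nonneg b a). pose proof (Rabs_pos (c a b)). pose proof (Rabs_pos (f a b)).
  assert (Rabs (c a b) * Rabs (f a b) <= e * (L * stdist b a)) by (apply Rmult_le_compat; lra).
  nra.
Qed.

(** * The approximate Riemann solver *)

Section Model.
Variables g eta lam : R.
Hypotheses (Hg : 0 < g) (Heta : 0 < eta) (Hlam : 0 < lam).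

Local Notation k := (eta / (4 * lam)).
Local Notation Pr := (Defs.Pr g eta lam).
Local Notation dPs := (Defs.dPs g eta lam).
Local Notation asp := (Defs.asp g eta lam).
Local Notation Energy := (Defs.Energy g eta lam).
Local Notation Gflux := (Defs.Gflux g eta lam).
Local Notation cL := (Defs.cL g eta lam).
Local Notation cR := (Defs.cR g eta lam).
Local Notation ustar := (Defs.ustar g eta lam).
Local Notation pistar := (Defs.pistar g eta lam).
Local Notation hLstar := (Defs.hLstar g eta lam).
Local Notation hRstar := (Defs.hRstar g eta lam).
Local Notation qLstar := (Defs.qLstar g eta lam).
Local Notation qRstar := (Defs.qRstar g eta lam).
Local Notation Sig1 := (Defs.Sig1 g eta lam).
Local Notation Sig2 := (Defs.Sig2 g eta lam).
Local Notation Sig3 := (Defs.Sig3 g eta lam).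
Local Notation Fh := (Defs.Fh g eta lam).
Local Notation Fhu := (Defs.Fhu g eta lam).
Local Notation FluxL := (Defs.FluxL g eta lam).
Local Notation FluxR := (Defs.FluxR g eta lam).
Local Notation Fphys := (Defs.Fphys g eta lam).
Local Notation Aspeed := (Defs.Aspeed g eta lam).
Local Notation scheme := (Defs.scheme g eta lam).
Local Notation CFL := (Defs.CFL g eta lam).

Lemma k_pos : 0 < k.
Proof. unfold Rdiv. apply Rmult_lt_0_compat; [lra|]. apply Rinv_0_lt_compat. lra. Qed.

Lemma Pr_eq q : Pr q = g * sh q ^ 2 / 2 + 2 * k * sh q * (sigzz q - sigxx q).
Proof. unfold Defs.Pr. field. lra. Qed.

Lemma dPs_eq q : dPs q = g * sh q + 3 * (2 * k * sigzz q) + 2 * k * sigxx q.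
Proof. unfold Defs.dPs. field. lra. Qed.

Lemma dPs_pos q : adm q -> 0 < dPs q.
Proof.
  intros Hq. rewrite dPs_eq. pose proof k_pos. pose proof (adm_h q Hq).
  pose proof (adm_sigxx q Hq). pose proof (adm_sigzz q Hq). nra.
Qed.

Lemma asp_pos q : adm q -> 0 < asp q.
Proof. intros Hq. apply sqrt_lt_R0, dPs_pos, Hq. Qed.

Lemma asp_sqr q : adm q -> asp q ^ 2 = dPs q.
Proof. intros Hq. unfold Defs.asp. rewrite pow2_sqrt; [reflexivity|]. left. apply dPs_pos, Hq. Qed.

Lemma Pr_abs_le q : adm q -> Rabs (Pr q) <= sh q * asp q ^ 2.
Proof.
  intros Hq. rewrite asp_sqr, Pr_eq, dPs_eq by exact Hq. pose proof k_pos.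
  pose proof (adm_h q Hq). pose proof (adm_sigxx q Hq). pose proof (adm_sigzz q Hq).
  assert (0 < k * sh q * sigxx q) by (apply Rmult_lt_0_compat; [apply Rmult_lt_0_compat|]; assumption).
  assert (0 < k * sh q * sigzz q) by (apply Rmult_lt_0_compat; [apply Rmult_lt_0_compat|]; assumption).
  assert (0 < g * sh q ^ 2) by (apply Rmult_lt_0_compat; [assumption | apply pow_lt; assumption]).
  apply Rabs_le. split; nra.
Qed.

Lemma Pr_mirror q : Pr (mirror q) = Pr q.
Proof. reflexivity. Qed.

Lemma Pr_polynomial q : adm q -> Pr q = g / 2 * (sh q * sh q) + eta / (2 * lam) * (shzz q - shxx q).
Proof. intros Hq. pose proof (adm_h q Hq). unfold Defs.Pr, sigxx, sigzz. field. lra. Qed.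

Lemma Energy_mirror q : Energy (mirror q) = Energy q.
Proof. unfold Defs.Energy, sigxx, sigzz, vel. cbn [mirror sh shu shxx shzz]. unfold Rdiv. ring. Qed.

Lemma cL_mirror ql qr : cL (mirror qr) (mirror ql) = cR ql qr.
Proof.
  unfold Defs.cL, Defs.cR. rewrite !vel_mirror.
  replace (- vel qr - - vel ql) with (vel ql - vel qr) by ring.
  rewrite (Rplus_comm (sh qr * _)). reflexivity.
Qed.

Lemma cR_mirror ql qr : cR (mirror qr) (mirror ql) = cL ql qr.
Proof.
  unfold Defs.cL, Defs.cR. rewrite !vel_mirror.
  replace (- vel qr - - vel ql) with (vel ql - vel qr) by ring.
  rewrite (Rplus_comm (sh qr * _)). reflexivity.
Qed.

Lemma ustar_mirror ql qr : ustar (mirror qr) (mirror ql) = - ustar ql qr.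
Proof.
  unfold Defs.ustar. rewrite cL_mirror, cR_mirror, !vel_mirror, !Pr_mirror, (Rplus_comm (cR ql qr)).
  unfold Rdiv. ring.
Qed.

Lemma pistar_mirror ql qr : pistar (mirror qr) (mirror ql) = pistar ql qr.
Proof.
  unfold Defs.pistar. rewrite cL_mirror, cR_mirror, !vel_mirror, !Pr_mirror, (Rplus_comm (cR ql qr)).
  unfold Rdiv. ring.
Qed.

Lemma hLstar_mirror ql qr : hLstar (mirror qr) (mirror ql) = hRstar ql qr.
Proof.
  unfold Defs.hLstar, Defs.hRstar.
  rewrite cL_mirror, cR_mirror, !vel_mirror, !Pr_mirror, (Rplus_comm (cR ql qr)).
  replace (- vel ql - - vel qr) with (vel qr - vel ql) by ring. reflexivity.
Qed.

Lemma qLstar_mirror ql qr : qLstar (mirror qr) (mirror ql) = mirror (qRstar ql qr).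
Proof.
  unfold Defs.qLstar, Defs.qRstar. cbv zeta. rewrite hLstar_mirror, ustar_mirror.
  unfold mirror. cbn [sh shu shxx shzz]. f_equal. ring.
Qed.

Lemma Sig1_mirror ql qr : Sig1 (mirror qr) (mirror ql) = - Sig3 ql qr.
Proof.
  unfold Defs.Sig1, Defs.Sig3. rewrite cL_mirror, vel_mirror. cbn [mirror sh].
  unfold Rdiv. ring.
Qed.

Lemma Sig2_mirror ql qr : Sig2 (mirror qr) (mirror ql) = - Sig2 ql qr.
Proof. apply ustar_mirror. Qed.

Definition vel_gap ql qr := Rmax 0 (vel ql - vel qr).
Definition pres_gap ql qr :=
  Rmax 0 (Pr qr - Pr ql) / (sh ql * asp ql + sh qr * asp qr).
(* [cL = h a (1 + 2 y)] with [y] this relative excess over the sound speed. *)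
Definition excess ql qr := (vel_gap ql qr + pres_gap ql qr) / asp ql.

Lemma speed_denom_pos ql qr : adm ql -> adm qr -> 0 < sh ql * asp ql + sh qr * asp qr.
Proof.
  intros Hl Hr. pose proof (adm_h _ Hl). pose proof (adm_h _ Hr).
  pose proof (asp_pos _ Hl). pose proof (asp_pos _ Hr). nra.
Qed.

Lemma pres_gap_nonneg ql qr : adm ql -> adm qr -> 0 <= pres_gap ql qr.
Proof.
  intros Hl Hr. unfold pres_gap. apply Rmult_le_pos; [apply Rmax_l|].
  left. apply Rinv_0_lt_compat, speed_denom_pos; assumption.
Qed.

Lemma cL_ge ql qr : adm ql -> adm qr -> sh ql * asp ql <= cL ql qr.
Proof.
  intros Hl Hr. change (cL ql qr) with (sh ql * (asp ql + 2 * (vel_gap ql qr + pres_gap ql qr))).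
  pose proof (Rmax_l 0 (vel ql - vel qr)). pose proof (pres_gap_nonneg ql qr Hl Hr).
  pose proof (adm_h _ Hl). unfold vel_gap. nra.
Qed.

Lemma cR_ge ql qr : adm ql -> adm qr -> sh qr * asp qr <= cR ql qr.
Proof. intros Hl Hr. rewrite <- cL_mirror. exact (cL_ge (mirror qr) (mirror ql) Hr Hl). Qed.

Lemma cL_pos ql qr : adm ql -> adm qr -> 0 < cL ql qr.
Proof.
  intros Hl Hr. pose proof (cL_ge ql qr Hl Hr). pose proof (adm_h _ Hl). pose proof (asp_pos _ Hl). nra.
Qed.

Lemma cR_pos ql qr : adm ql -> adm qr -> 0 < cR ql qr.
Proof. intros Hl Hr. rewrite <- cL_mirror. exact (cL_pos (mirror qr) (mirror ql) Hr Hl). Qed.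

Lemma ustar_sub_vel ql qr : adm ql -> adm qr ->
  ustar ql qr - vel ql = (cR ql qr * (vel qr - vel ql) + Pr ql - Pr qr) / (cL ql qr + cR ql qr).
Proof.
  intros Hl Hr. pose proof (cL_pos ql qr Hl Hr). pose proof (cR_pos ql qr Hl Hr).
  unfold Defs.ustar. field. lra.
Qed.

Section LeftWaveOfPair.
Variables ql qr : st.
Hypotheses (Hql : adm ql) (Hqr : adm qr).

Local Notation hl := (sh ql).
Local Notation vl := (vel ql).
Local Notation al := (asp ql).
Local Notation c := (cL ql qr).
Local Notation us := (ustar ql qr).
Local Notation y := (excess ql qr).

Lemma inv_hLstar : / hLstar ql qr = / hl + (us - vl) / c.
Proof.
  pose proof (cL_pos ql qr Hql Hqr). pose proof (cR_pos ql qr Hql Hqr). pose proof (adm_h _ Hql).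
  unfold Defs.hLstar. rewrite Rinv_inv, ustar_sub_vel by assumption. field. lra.
Qed.

Lemma pistar_eq : pistar ql qr = Pr ql - c * (us - vl).
Proof.
  pose proof (cL_pos ql qr Hql Hqr). pose proof (cR_pos ql qr Hql Hqr).
  rewrite ustar_sub_vel by assumption. unfold Defs.pistar. field. lra.
Qed.

Lemma vel_sub_ustar_le : vl - us <= vel_gap ql qr + pres_gap ql qr.
Proof.
  pose proof (cL_pos ql qr Hql Hqr) as Hc. pose proof (cR_pos ql qr Hql Hqr) as Hc'.
  pose proof (cL_ge ql qr Hql Hqr). pose proof (cR_ge ql qr Hql Hqr).
  pose proof (speed_denom_pos ql qr Hql Hqr) as HD. pose proof (pres_gap_nonneg ql qr Hql Hqr).
  assert (Hv : vl - vel qr <= vel_gap ql qr) by apply Rmax_r.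
  assert (Hv0 : 0 <= vel_gap ql qr) by apply Rmax_l.
  assert (Hp : Pr qr - Pr ql <= pres_gap ql qr * (hl * al + sh qr * asp qr)).
  { unfold pres_gap, Rdiv. rewrite Rmult_assoc, Rinv_l, Rmult_1_r by lra. apply Rmax_r. }
  replace (vl - us) with (- (us - vl)) by ring. rewrite ustar_sub_vel by assumption.
  apply (Rmult_le_reg_r (c + cR ql qr)); [lra|].
  unfold Rdiv. rewrite Ropp_mult_distr_l_reverse, Rmult_assoc, Rinv_l by lra. nra.
Qed.

Lemma cL_eq_excess : c = hl * al * (1 + 2 * y).
Proof.
  pose proof (asp_pos _ Hql). unfold excess.
  change c with (hl * (al + 2 * (vel_gap ql qr + pres_gap ql qr))). field. lra.
Qed.

Lemma excess_nonneg : 0 <= y.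
Proof.
  pose proof (asp_pos _ Hql). pose proof (pres_gap_nonneg ql qr Hql Hqr).
  pose proof (Rmax_l 0 (vl - vel qr)). unfold excess, vel_gap in *.
  apply Rmult_le_pos; [lra|]. left. apply Rinv_0_lt_compat. lra.
Qed.

Lemma compression_ge : 1 + y <= hl / hLstar ql qr * (1 + 2 * y).
Proof.
  pose proof (asp_pos _ Hql). pose proof (adm_h _ Hql). pose proof excess_nonneg.
  pose proof vel_sub_ustar_le as Hu.
  replace (vel_gap ql qr + pres_gap ql qr) with (al * y) in Hu
    by (unfold excess; field; lra).
  unfold Rdiv. rewrite inv_hLstar, cL_eq_excess.
  replace (hl * (/ hl + (us - vl) / (hl * al * (1 + 2 * y))) * (1 + 2 * y))
    with (1 + 2 * y + (us - vl) / al) by (field; split; lra).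
  assert (- y <= (us - vl) / al).
  { apply (Rmult_le_reg_r al); [lra|]. unfold Rdiv. rewrite Rmult_assoc, Rinv_l by lra. lra. }
  lra.
Qed.

Lemma hLstar_pos : 0 < hLstar ql qr.
Proof.
  pose proof compression_ge. pose proof excess_nonneg. pose proof (adm_h _ Hql).
  assert (Hinv : 0 < / hLstar ql qr).
  { apply (Rmult_lt_reg_l hl); [lra|]. rewrite Rmult_0_r. unfold Rdiv in *. nra. }
  rewrite <- (Rinv_inv (hLstar ql qr)). apply Rinv_0_lt_compat, Hinv.
Qed.

Let W := qLstar ql qr.

Lemma Sig1_lt_Sig2 : Sig1 ql qr < Sig2 ql qr.
Proof.
  pose proof hLstar_pos. pose proof (cL_pos ql qr Hql Hqr). pose proof (adm_h _ Hql).
  assert (E : Sig2 ql qr - Sig1 ql qr = c * / hLstar ql qr).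
  { unfold Defs.Sig1, Defs.Sig2. rewrite inv_hLstar. field. lra. }
  assert (0 < c * / hLstar ql qr) by (apply Rmult_lt_0_compat; [|apply Rinv_0_lt_compat]; assumption).
  lra.
Qed.

Lemma sh_qLstar : sh W = hLstar ql qr.
Proof. reflexivity. Qed.

Lemma shu_qLstar : shu W = hLstar ql qr * us.
Proof. reflexivity. Qed.

Lemma vel_qLstar : vel W = us.
Proof. pose proof hLstar_pos. unfold vel. rewrite sh_qLstar, shu_qLstar. field. lra. Qed.

Lemma shxx_qLstar : shxx W = shxx ql * hl / hLstar ql qr.
Proof.
  pose proof hLstar_pos. pose proof (adm_h _ Hql). unfold W, Defs.qLstar, sigxx. cbn [shxx].
  field. lra.
Qed.

Lemma shzz_qLstar : shzz W = shzz ql * (hLstar ql qr / hl) ^ 3.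
Proof.
  pose proof hLstar_pos. pose proof (adm_h _ Hql). unfold W, Defs.qLstar, sigzz. cbn [shzz].
  field. lra.
Qed.

Lemma sigxx_qLstar : sigxx W = sigxx ql * (hl / hLstar ql qr) ^ 2.
Proof.
  pose proof hLstar_pos. pose proof (adm_h _ Hql). unfold sigxx at 1.
  rewrite shxx_qLstar, sh_qLstar. unfold sigxx. field. lra.
Qed.

Lemma sigzz_qLstar : sigzz W = sigzz ql * (hLstar ql qr / hl) ^ 2.
Proof.
  pose proof hLstar_pos. pose proof (adm_h _ Hql). unfold sigzz at 1.
  rewrite shzz_qLstar, sh_qLstar. unfold sigzz. field. lra.
Qed.

Lemma qLstar_adm : adm W.
Proof.
  pose proof hLstar_pos. pose proof (adm_h _ Hql).
  pose proof (adm_sigxx _ Hql). pose proof (adm_sigzz _ Hql).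
  assert (0 < hl / hLstar ql qr) by (apply Rdiv_lt_0_compat; assumption).
  assert (0 < hLstar ql qr / hl) by (apply Rdiv_lt_0_compat; assumption).
  split; [exact hLstar_pos|]. split.
  - change (0 < sigxx W). rewrite sigxx_qLstar. apply Rmult_lt_0_compat; [|apply pow_lt]; assumption.
  - change (0 < sigzz W). rewrite sigzz_qLstar. apply Rmult_lt_0_compat; [|apply pow_lt]; assumption.
Qed.

Lemma wave1_mass : shu W - shu ql = Sig1 ql qr * (sh W - sh ql).
Proof.
  rewrite shu_qLstar, (shu_eq ql Hql). unfold Defs.Sig1.
  apply (wave_mass _ _ _ _ _ (adm_h _ Hql) hLstar_pos (cL_pos ql qr Hql Hqr) inv_hLstar).
Qed.

Lemma wave1_momentum :
  shu W * vel W + pistar ql qr - (shu ql * vl + Pr ql) = Sig1 ql qr * (shu W - shu ql).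
Proof.
  rewrite vel_qLstar, shu_qLstar, (shu_eq ql Hql), pistar_eq. unfold Defs.Sig1.
  rewrite <- (wave_momentum _ _ _ _ _ (adm_h _ Hql) hLstar_pos (cL_pos ql qr Hql Hqr) inv_hLstar).
  ring.
Qed.

Lemma wave1_energy_dissipation :
  0 <= Sig1 ql qr * (Energy W - Energy ql)
       - ((Energy W + pistar ql qr) * us - (Energy ql + Pr ql) * vl).
Proof.
  pose proof (adm_h _ Hql). pose proof (adm_sigxx _ Hql). pose proof (adm_sigzz _ Hql).
  pose proof (cL_pos ql qr Hql Hqr). pose proof k_pos. pose proof excess_nonneg.
  pose proof (wave_energy_dissipation _ _ _ _ _ (adm_h _ Hql) hLstar_pos (cL_pos ql qr Hql Hqr)
    inv_hLstar g k (sigxx ql) (sigzz ql) (adm_sigxx _ Hql) (adm_sigzz _ Hql)) as D.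
  cbv zeta in D.
  change (Energy W) with (energy_of g k (sh W) (vel W) (sigxx W) (sigzz W)).
  change (Energy ql) with (energy_of g k hl vl (sigxx ql) (sigzz ql)).
  rewrite sh_qLstar, vel_qLstar, sigxx_qLstar, sigzz_qLstar, pistar_eq, Pr_eq.
  unfold Defs.Sig1. rewrite D.
  assert (Hc : c ^ 2 / hl ^ 2 = (g * hl + 3 * (2 * k * sigzz ql) + 2 * k * sigxx ql) * (1 + 2 * y) ^ 2).
  { rewrite cL_eq_excess, <- dPs_eq, <- (asp_sqr ql Hql). field. lra. }
  rewrite Hc.
  pose proof (subcharacteristic_bound (g * hl) (2 * k * sigxx ql) (2 * k * sigzz ql) y
    (hl / hLstar ql qr) ltac:(nra) ltac:(nra) ltac:(nra) excess_nonneg compression_ge).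
  apply Rmult_le_pos; [|lra].
  apply Rmult_le_pos; [|lra]. apply Rmult_le_pos; [lra|apply pow2_ge_0].
Qed.

Lemma wave1_transport_xx :
  shxx W * us - shxx ql * vl - Sig1 ql qr * (shxx W - shxx ql)
  = shxx ql * (hl / hLstar ql qr + 1) * (us - vl).
Proof.
  rewrite shxx_qLstar. unfold Defs.Sig1.
  apply (wave_transport_xx _ _ _ _ _ (adm_h _ Hql) hLstar_pos (cL_pos ql qr Hql Hqr) inv_hLstar).
Qed.

Lemma wave1_transport_zz :
  shzz W * us - shzz ql * vl - Sig1 ql qr * (shzz W - shzz ql)
  = - (shzz ql * (hl / hLstar ql qr + 1) / (hl / hLstar ql qr) ^ 2) * (us - vl).
Proof.
  rewrite shzz_qLstar. unfold Defs.Sig1.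
  apply (wave_transport_zz _ _ _ _ _ (adm_h _ Hql) hLstar_pos (cL_pos ql qr Hql Hqr) inv_hLstar).
Qed.

Lemma qLstar_shxx_mul_sh : shxx W * sh W = shxx ql * hl.
Proof. pose proof hLstar_pos. rewrite shxx_qLstar, sh_qLstar. field. lra. Qed.

Lemma qLstar_shzz_div_sh3 : shzz W / sh W ^ 3 = shzz ql / hl ^ 3.
Proof.
  pose proof hLstar_pos. pose proof (adm_h _ Hql).
  rewrite shzz_qLstar, sh_qLstar. field. lra.
Qed.

Lemma qLstar_eq : us = vl -> W = ql.
Proof.
  intros Hu. pose proof hLstar_pos. pose proof (adm_h _ Hql).
  assert (Eh : hLstar ql qr = hl).
  { rewrite <- (Rinv_inv (hLstar ql qr)), inv_hLstar, Hu, Rminus_diag_eq, Rdiv_0_l, Rplus_0_r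
      by reflexivity.
    apply Rinv_inv. }
  destruct ql as [h0 hu0 X0 Z0]. unfold W, Defs.qLstar. cbv zeta.
  rewrite Eh, Hu. unfold vel, sigxx, sigzz. cbn [sh shu shxx shzz] in *.
  f_equal; field; lra.
Qed.
End LeftWaveOfPair.

Section RightWaveOfPair.
Variables ql qr : st.
Hypotheses (Hql : adm ql) (Hqr : adm qr).

Local Notation us := (ustar ql qr).
Let W := qRstar ql qr.

Lemma qRstar_as_mirror : W = mirror (qLstar (mirror qr) (mirror ql)).
Proof. unfold W. rewrite qLstar_mirror, mirror_involutive. reflexivity. Qed.

Lemma Sig2_lt_Sig3 : Sig2 ql qr < Sig3 ql qr.
Proof.
  pose proof (Sig1_lt_Sig2 (mirror qr) (mirror ql) Hqr Hql) as H.
  rewrite Sig1_mirror, Sig2_mirror in H. lra.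
Qed.

Lemma vel_qRstar : vel W = us.
Proof.
  rewrite qRstar_as_mirror, vel_mirror, vel_qLstar, ustar_mirror by assumption. ring.
Qed.

Lemma qRstar_adm : adm W.
Proof. rewrite qRstar_as_mirror. apply qLstar_adm; assumption. Qed.

Lemma wave3_mass : shu qr - shu W = Sig3 ql qr * (sh qr - sh W).
Proof.
  pose proof (wave1_mass (mirror qr) (mirror ql) Hqr Hql) as H.
  rewrite qLstar_mirror, Sig1_mirror in H. cbn [mirror sh shu] in H. fold W in H. lra.
Qed.

Lemma wave3_momentum :
  shu qr * vel qr + Pr qr - (shu W * vel W + pistar ql qr) = Sig3 ql qr * (shu qr - shu W).
Proof.
  pose proof (wave1_momentum (mirror qr) (mirror ql) Hqr Hql) as H.
  rewrite qLstar_mirror, Sig1_mirror, pistar_mirror, !vel_mirror, Pr_mirror in H.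
  cbn [mirror sh shu] in H. fold W in H. lra.
Qed.

Lemma wave3_energy_dissipation :
  0 <= Sig3 ql qr * (Energy qr - Energy W)
       - ((Energy qr + Pr qr) * vel qr - (Energy W + pistar ql qr) * us).
Proof.
  pose proof (wave1_energy_dissipation (mirror qr) (mirror ql) Hqr Hql) as H.
  rewrite qLstar_mirror, Sig1_mirror, pistar_mirror, ustar_mirror, vel_mirror, Pr_mirror,
    !Energy_mirror in H.
  fold W in H. lra.
Qed.

Lemma wave3_transport_xx :
  shxx qr * vel qr - shxx W * us - Sig3 ql qr * (shxx qr - shxx W)
  = shxx qr * (sh qr / hRstar ql qr + 1) * (vel qr - us).
Proof.
  pose proof (wave1_transport_xx (mirror qr) (mirror ql) Hqr Hql) as H.
  rewrite qLstar_mirror, Sig1_mirror, ustar_mirror, vel_mirror, hLstar_mirror in H.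
  cbn [mirror sh shxx] in H. fold W in H. lra.
Qed.

Lemma wave3_transport_zz :
  shzz qr * vel qr - shzz W * us - Sig3 ql qr * (shzz qr - shzz W)
  = - (shzz qr * (sh qr / hRstar ql qr + 1) / (sh qr / hRstar ql qr) ^ 2) * (vel qr - us).
Proof.
  pose proof (wave1_transport_zz (mirror qr) (mirror ql) Hqr Hql) as H.
  rewrite qLstar_mirror, Sig1_mirror, ustar_mirror, vel_mirror, hLstar_mirror in H.
  cbn [mirror sh shzz] in H. fold W in H. lra.
Qed.

Lemma qRstar_shxx_mul_sh : shxx W * sh W = shxx qr * sh qr.
Proof. rewrite qRstar_as_mirror. exact (qLstar_shxx_mul_sh (mirror qr) (mirror ql) Hqr Hql). Qed.

Lemma qRstar_shzz_div_sh3 : shzz W / sh W ^ 3 = shzz qr / sh qr ^ 3.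
Proof. rewrite qRstar_as_mirror. exact (qLstar_shzz_div_sh3 (mirror qr) (mirror ql) Hqr Hql). Qed.

Lemma qRstar_eq : us = vel qr -> W = qr.
Proof.
  intros Hu. rewrite qRstar_as_mirror, (qLstar_eq (mirror qr) (mirror ql) Hqr Hql).
  - apply mirror_involutive.
  - rewrite ustar_mirror, vel_mirror, Hu. reflexivity.
Qed.
End RightWaveOfPair.

(** * Numerical fluxes and energy *)

Lemma wave2_mass ql qr :
  shu (qRstar ql qr) - shu (qLstar ql qr) = Sig2 ql qr * (sh (qRstar ql qr) - sh (qLstar ql qr)).
Proof. cbn [Defs.qLstar Defs.qRstar sh shu]. unfold Defs.Sig2. ring. Qed.

Lemma wave2_momentum ql qr : adm ql -> adm qr ->
  shu (qRstar ql qr) * vel (qRstar ql qr) + pistar ql qr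
  - (shu (qLstar ql qr) * vel (qLstar ql qr) + pistar ql qr)
  = Sig2 ql qr * (shu (qRstar ql qr) - shu (qLstar ql qr)).
Proof.
  intros Hl Hr. rewrite vel_qLstar, vel_qRstar by assumption. unfold Defs.Sig2. ring.
Qed.

(** Jumps across the three waves weighted by [s] of their speeds; [s = Rmin 0]
    and [s = Rmax 0] give the left and right fluctuations. *)
Definition wave_sum (s : R -> R) (phi : st -> R) ql qr :=
  s (Sig1 ql qr) * (phi (qLstar ql qr) - phi ql)
  + s (Sig2 ql qr) * (phi (qRstar ql qr) - phi (qLstar ql qr))
  + s (Sig3 ql qr) * (phi qr - phi (qRstar ql qr)).

Lemma wave_sum_split phi ql qr :
  wave_sum (Rmin 0) phi ql qr + wave_sum (Rmax 0) phi ql qr = wave_sum (fun s => s) phi ql qr.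
Proof.
  unfold wave_sum. rewrite <- (Rmin0_add_Rmax0 (Sig1 ql qr)) at 3.
  rewrite <- (Rmin0_add_Rmax0 (Sig2 ql qr)) at 3. rewrite <- (Rmin0_add_Rmax0 (Sig3 ql qr)) at 3.
  ring.
Qed.

Section FluxOfPair.
Variables ql qr : st.
Hypotheses (Hql : adm ql) (Hqr : adm qr).

Lemma wave_sum_sh : wave_sum (fun s => s) sh ql qr = shu qr - shu ql.
Proof.
  pose proof (wave1_mass ql qr Hql Hqr). pose proof (wave2_mass ql qr).
  pose proof (wave3_mass ql qr Hql Hqr). unfold wave_sum. lra.
Qed.

Lemma wave_sum_shu :
  wave_sum (fun s => s) shu ql qr = shu qr * vel qr + Pr qr - (shu ql * vel ql + Pr ql).
Proof.
  pose proof (wave1_momentum ql qr Hql Hqr). pose proof (wave2_momentum ql qr Hql Hqr).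
  pose proof (wave3_momentum ql qr Hql Hqr). unfold wave_sum. lra.
Qed.

(* [Fh] and [Fhu] read the solution at [xi = 0]; by the jump relations this is
   the left state corrected by the waves of negative speed. *)
Lemma Fh_eq : Fh ql qr = shu ql + wave_sum (Rmin 0) sh ql qr.
Proof.
  pose proof (wave1_mass ql qr Hql Hqr). pose proof (wave2_mass ql qr).
  pose proof (wave3_mass ql qr Hql Hqr).
  pose proof (Sig1_lt_Sig2 ql qr Hql Hqr). pose proof (Sig2_lt_Sig3 ql qr Hql Hqr).
  unfold Defs.Fh, Defs.at0_state, wave_sum.
  destruct (Rlt_dec 0 (Sig1 ql qr)).
  { rewrite !Rmin_left by lra. ring. }
  rewrite (Rmin_right 0 (Sig1 ql qr)) by lra.
  destruct (Rlt_dec 0 (Sig2 ql qr)).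
  { rewrite (Rmin_left 0 (Sig2 ql qr)), (Rmin_left 0 (Sig3 ql qr)) by lra. lra. }
  rewrite (Rmin_right 0 (Sig2 ql qr)) by lra.
  destruct (Rlt_dec 0 (Sig3 ql qr)).
  - rewrite (Rmin_left 0 (Sig3 ql qr)) by lra. lra.
  - rewrite (Rmin_right 0 (Sig3 ql qr)) by lra. lra.
Qed.

Lemma Fhu_eq : Fhu ql qr = shu ql * vel ql + Pr ql + wave_sum (Rmin 0) shu ql qr.
Proof.
  pose proof (wave1_momentum ql qr Hql Hqr). pose proof (wave2_momentum ql qr Hql Hqr).
  pose proof (wave3_momentum ql qr Hql Hqr).
  pose proof (Sig1_lt_Sig2 ql qr Hql Hqr). pose proof (Sig2_lt_Sig3 ql qr Hql Hqr).
  unfold Defs.Fhu, Defs.at0_state, Defs.at0_pi, wave_sum.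
  destruct (Rlt_dec 0 (Sig1 ql qr)).
  { rewrite !Rmin_left by lra. ring. }
  rewrite (Rmin_right 0 (Sig1 ql qr)) by lra.
  destruct (Rlt_dec 0 (Sig3 ql qr)); destruct (Rlt_dec 0 (Sig2 ql qr)); try lra.
  - rewrite (Rmin_left 0 (Sig2 ql qr)), (Rmin_left 0 (Sig3 ql qr)) by lra. lra.
  - rewrite (Rmin_right 0 (Sig2 ql qr)), (Rmin_left 0 (Sig3 ql qr)) by lra. lra.
  - rewrite (Rmin_right 0 (Sig2 ql qr)), (Rmin_right 0 (Sig3 ql qr)) by lra. lra.
Qed.
End FluxOfPair.

Definition fluct (s : R -> R) ql qr : st :=
  St (wave_sum s sh ql qr) (wave_sum s shu ql qr) (wave_sum s shxx ql qr) (wave_sum s shzz ql qr).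

Lemma FluxL_eq ql qr : adm ql -> adm qr -> FluxL ql qr = stadd (Fphys ql) (fluct (Rmin 0) ql qr).
Proof.
  intros Hl Hr. unfold Defs.FluxL, Defs.Fphys, Defs.FwL, stadd, fluct, wave_sum.
  rewrite Fh_eq, Fhu_eq by assumption. cbn [sh shu shxx shzz]. unfold wave_sum.
  f_equal; ring.
Qed.

Lemma FluxR_eq ql qr : adm ql -> adm qr -> FluxR ql qr = stsub (Fphys qr) (fluct (Rmax 0) ql qr).
Proof.
  intros Hl Hr. pose proof (wave_sum_split sh ql qr). pose proof (wave_sum_split shu ql qr).
  pose proof (wave_sum_sh ql qr Hl Hr). pose proof (wave_sum_shu ql qr Hl Hr).
  unfold Defs.FluxR, Defs.Fphys, Defs.FwR, stsub, fluct.
  rewrite Fh_eq, Fhu_eq by assumption. cbn [sh shu shxx shzz].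
  f_equal; unfold wave_sum in *; lra.
Qed.

Lemma ustar_diag q : adm q -> ustar q q = vel q.
Proof.
  intros Hq. assert (ustar q q - vel q = 0) by (rewrite ustar_sub_vel by exact Hq; unfold Rdiv; ring).
  lra.
Qed.

Lemma wave_sum_diag s phi q : adm q -> wave_sum s phi q q = 0.
Proof.
  intros Hq. unfold wave_sum.
  rewrite qLstar_eq, qRstar_eq by (try apply ustar_diag; assumption). ring.
Qed.

Lemma energy_wave_sum ql qr : adm ql -> adm qr ->
  Gflux qr - Gflux ql <= wave_sum (fun s => s) Energy ql qr.
Proof.
  intros Hl Hr. pose proof (wave1_energy_dissipation ql qr Hl Hr).
  pose proof (wave3_energy_dissipation ql qr Hl Hr).
  unfold Defs.Gflux, wave_sum, Defs.Sig2 in *. lra.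
Qed.

Definition Gnum ql qr := Gflux ql + wave_sum (Rmin 0) Energy ql qr.

Lemma Gnum_diag q : adm q -> Gnum q q = Gflux q.
Proof. intros Hq. unfold Gnum. rewrite wave_sum_diag by exact Hq. ring. Qed.

(* The coefficients are the partial derivatives of [Energy] at [m] in the
   variables [(h, hu, h sigma_xx, h sigma_zz)]. *)
Definition energy_tangent m Q :=
  Energy m
  + (- vel m ^ 2 / 2 + g * sh m - k * (ln (sigxx m) + ln (sigzz m))) * (sh Q - sh m)
  + vel m * (shu Q - shu m)
  + k * (1 - / sigxx m) * (shxx Q - shxx m) + k * (1 - / sigzz m) * (shzz Q - shzz m).

Lemma energy_tangent_affine m : affine (energy_tangent m).
Proof.
  set (d1 := - vel m ^ 2 / 2 + g * sh m - k * (ln (sigxx m) + ln (sigzz m))).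
  exists (Energy m - d1 * sh m - vel m * shu m - k * (1 - / sigxx m) * shxx m
          - k * (1 - / sigzz m) * shzz m), d1, (vel m), (k * (1 - / sigxx m)), (k * (1 - / sigzz m)).
  intros Q. unfold energy_tangent. fold d1. ring.
Qed.

Lemma energy_tangent_self m : energy_tangent m m = Energy m.
Proof. unfold energy_tangent. ring. Qed.

Lemma energy_ge_tangent m Q : adm m -> adm Q -> energy_tangent m Q <= Energy Q.
Proof.
  intros Hm HQ. pose proof k_pos.
  pose proof (adm_h _ Hm). pose proof (adm_sigxx _ Hm) as Hxm. pose proof (adm_sigzz _ Hm) as Hzm.
  pose proof (adm_h _ HQ). pose proof (adm_sigxx _ HQ) as HxQ. pose proof (adm_sigzz _ HQ) as HzQ.
  pose proof (ln_sub_le_div_sub_1 _ _ HxQ Hxm). pose proof (ln_sub_le_div_sub_1 _ _ HzQ Hzm).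
  unfold energy_tangent, Defs.Energy.
  rewrite (shu_eq m Hm), (shu_eq Q HQ), (shxx_eq m Hm), (shxx_eq Q HQ), (shzz_eq m Hm),
    (shzz_eq Q HQ), !ln_mult by assumption.
  (* the gap is a sum of four nonnegative terms *)
  assert (E : forall h u sx sz h' u' sx' sz' lx lz lx' lz',
    0 < h -> 0 < sx -> 0 < sz ->
    h' * u' ^ 2 / 2 + g * h' ^ 2 / 2 + k * h' * (sx' + sz' - (lx' + lz') - 2)
    - (h * u ^ 2 / 2 + g * h ^ 2 / 2 + k * h * (sx + sz - (lx + lz) - 2)
       + (- u ^ 2 / 2 + g * h - k * (lx + lz)) * (h' - h) + u * (h' * u' - h * u)
       + k * (1 - / sx) * (h' * sx' - h * sx) + k * (1 - / sz) * (h' * sz' - h * sz))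
    = h' * (u' - u) ^ 2 / 2 + g * (h' - h) ^ 2 / 2
      + k * h' * ((sx' / sx - 1) - (lx' - lx)) + k * h' * ((sz' / sz - 1) - (lz' - lz))).
  { intros. field. lra. }
  match goal with |- ?A <= ?B => cut (0 <= B - A); [lra|] end.
  rewrite E by assumption.
  assert (0 <= sh Q * (vel Q - vel m) ^ 2 / 2 + g * (sh Q - sh m) ^ 2 / 2).
  { pose proof (pow2_ge_0 (vel Q - vel m)). pose proof (pow2_ge_0 (sh Q - sh m)). nra. }
  assert (0 <= k * sh Q * ((sigxx Q / sigxx m - 1) - (ln (sigxx Q) - ln (sigxx m)))).
  { apply Rmult_le_pos; [nra | lra]. }
  assert (0 <= k * sh Q * ((sigzz Q / sigzz m - 1) - (ln (sigzz Q) - ln (sigzz m)))).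
  { apply Rmult_le_pos; [nra | lra]. }
  lra.
Qed.

(** * Propagation speed, consistency and numerical viscosity *)

Section SpeedBound.
Variables ql qr : st.
Hypotheses (Hql : adm ql) (Hqr : adm qr).

Local Notation D := (sh ql * asp ql + sh qr * asp qr).
Local Notation S := (Rabs (vel ql) + Rabs (vel qr) + asp ql + asp qr).

Lemma Pr_diff_le : Rabs (Pr qr - Pr ql) <= (asp ql + asp qr) * D.
Proof.
  pose proof (Pr_abs_le ql Hql). pose proof (Pr_abs_le qr Hqr).
  pose proof (asp_pos ql Hql). pose proof (asp_pos qr Hqr).
  pose proof (adm_h ql Hql). pose proof (adm_h qr Hqr).
  assert (0 <= sh ql * asp ql * asp qr) by (apply Rmult_le_pos; [apply Rmult_le_pos|]; lra).
  assert (0 <= sh qr * asp qr * asp ql) by (apply Rmult_le_pos; [apply Rmult_le_pos|]; lra).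
  unfold Rminus. eapply Rle_trans; [apply Rabs_triang|]. rewrite Rabs_Ropp. nra.
Qed.

Lemma pres_gap_le : pres_gap ql qr <= asp ql + asp qr.
Proof.
  pose proof (speed_denom_pos ql qr Hql Hqr). pose proof (asp_pos ql Hql). pose proof (asp_pos qr Hqr).
  unfold pres_gap. apply (Rmult_le_reg_r D); [lra|].
  unfold Rdiv. rewrite Rmult_assoc, Rinv_l, Rmult_1_r by lra.
  apply Rmax_lub; [nra|]. eapply Rle_trans; [apply RRle_abs | apply Pr_diff_le].
Qed.

Lemma vel_gap_le : vel_gap ql qr <= Rabs (vel ql) + Rabs (vel qr).
Proof.
  unfold vel_gap. pose proof (Rabs_pos (vel ql)). pose proof (Rabs_pos (vel qr)).
  pose proof (RRle_abs (vel ql)). pose proof (Ropp_le_Rabs (vel qr)). apply Rmax_lub; lra.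
Qed.

Lemma Rabs_Sig1_le : Rabs (Sig1 ql qr) <= 3 * S.
Proof.
  pose proof vel_gap_le. pose proof pres_gap_le. pose proof (Rmax_l 0 (vel ql - vel qr)).
  pose proof (pres_gap_nonneg ql qr Hql Hqr). pose proof (asp_pos ql Hql). pose proof (asp_pos qr Hqr).
  pose proof (adm_h ql Hql). pose proof (Rabs_pos (vel qr)).
  assert (E : Sig1 ql qr = vel ql - asp ql - 2 * (vel_gap ql qr + pres_gap ql qr)).
  { unfold Defs.Sig1. change (cL ql qr) with (sh ql * (asp ql + 2 * (vel_gap ql qr + pres_gap ql qr))).
    field. lra. }
  rewrite E. unfold vel_gap in *. apply Rabs_le.
  pose proof (Ropp_le_Rabs (vel ql)). pose proof (RRle_abs (vel ql)). split; lra.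
Qed.

Lemma Rabs_Sig2_le : Rabs (Sig2 ql qr) <= 3 * S.
Proof.
  pose proof (cL_pos ql qr Hql Hqr). pose proof (cR_pos ql qr Hql Hqr).
  pose proof (cL_ge ql qr Hql Hqr). pose proof (cR_ge ql qr Hql Hqr).
  pose proof Pr_diff_le. pose proof (asp_pos ql Hql). pose proof (asp_pos qr Hqr).
  assert (Hsum : Rabs (vel qr - vel ql) <= Rabs (vel ql) + Rabs (vel qr)).
  { unfold Rminus. eapply Rle_trans; [apply Rabs_triang|]. rewrite Rabs_Ropp. lra. }
  assert (Hjump : Rabs (ustar ql qr - vel ql) <= Rabs (vel qr - vel ql) + (asp ql + asp qr)).
  { rewrite ustar_sub_vel by assumption. unfold Rdiv. rewrite Rabs_mult, Rabs_inv, (Rabs_pos_eq (_ + _)) by lra.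
    apply (Rmult_le_reg_r (cL ql qr + cR ql qr)); [lra|].
    rewrite Rmult_assoc, Rinv_l, Rmult_1_r by lra.
    replace (cR ql qr * (vel qr - vel ql) + Pr ql - Pr qr)
      with (cR ql qr * (vel qr - vel ql) + - (Pr qr - Pr ql)) by ring.
    eapply Rle_trans; [apply Rabs_triang|]. rewrite Rabs_Ropp, Rabs_mult, (Rabs_pos_eq (cR ql qr)) by lra.
    pose proof (Rabs_pos (vel qr - vel ql)). nra. }
  unfold Defs.Sig2. replace (ustar ql qr) with (vel ql + (ustar ql qr - vel ql)) by ring.
  eapply Rle_trans; [apply Rabs_triang|].
  pose proof (Rabs_pos (vel ql)). pose proof (Rabs_pos (vel qr)). lra.
Qed.
End SpeedBound.

Lemma Rabs_Sig3_le ql qr : adm ql -> adm qr ->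
  Rabs (Sig3 ql qr) <= 3 * (Rabs (vel ql) + Rabs (vel qr) + asp ql + asp qr).
Proof.
  intros Hl Hr. pose proof (Rabs_Sig1_le (mirror qr) (mirror ql) Hr Hl) as H.
  rewrite Sig1_mirror, Rabs_Ropp, !vel_mirror, !Rabs_Ropp in H.
  change (asp (mirror qr)) with (asp qr) in H. change (asp (mirror ql)) with (asp ql) in H. lra.
Qed.

Lemma Aspeed_le ql qr : adm ql -> adm qr ->
  Aspeed ql qr <= 3 * (Rabs (vel ql) + Rabs (vel qr) + asp ql + asp qr).
Proof.
  intros Hl Hr. unfold Defs.Aspeed.
  apply Rmax_lub; [|apply Rmax_lub].
  - apply Rabs_Sig1_le; assumption.
  - apply Rabs_Sig2_le; assumption.
  - apply Rabs_Sig3_le; assumption.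
Qed.

Section ContinuityOfFields.
Variable q : st.
Hypothesis Hq : adm q.

Lemma cont_vel : cont_at q (fun a _ => vel a).
Proof. unfold vel. cont_tac. apply adm_h_neq0, Hq. Qed.

Lemma cont_Pr : cont_at q (fun a _ => Pr a).
Proof.
  apply (cont_ext q _ (fun a _ => g / 2 * (sh a * sh a) + eta / (2 * lam) * (shzz a - shxx a)));
    [intros a b Ha _; apply Pr_polynomial, Ha | exact Hq | cont_tac].
Qed.

Lemma cont_asp : cont_at q (fun a _ => asp a).
Proof.
  apply cont_sqrt; [left; apply dPs_pos, Hq|].
  apply (cont_ext q _ (fun a _ => g * sh a + eta / (2 * lam) * (3 * (shzz a / sh a) + shxx a / sh a)));
    [reflexivity | exact Hq |].
  cont_tac; apply adm_h_neq0, Hq.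
Qed.
End ContinuityOfFields.

Ltac cont_field_atoms :=
  match goal with
  | |- cont_at ?q (fun a _ => vel a) => apply (cont_vel q); assumption
  | |- cont_at ?q (fun a _ => Pr a) => apply (cont_Pr q); assumption
  | |- cont_at ?q (fun a _ => asp a) => apply (cont_asp q); assumption
  | |- cont_at ?q (fun _ b => vel b) => apply (cont_swap q (fun a _ => vel a)), (cont_vel q); assumption
  | |- cont_at ?q (fun _ b => Pr b) => apply (cont_swap q (fun a _ => Pr a)), (cont_Pr q); assumption
  | |- cont_at ?q (fun _ b => asp b) => apply (cont_swap q (fun a _ => asp a)), (cont_asp q); assumption
  end.

Lemma cont_cL q : adm q -> cont_at q (fun a b => cL a b).
Proof.
  intros Hq. unfold Defs.cL. cont_with ltac:(idtac; cont_field_atoms).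
  pose proof (speed_denom_pos q q Hq Hq). lra.
Qed.

Lemma cont_cR q : adm q -> cont_at q (fun a b => cR a b).
Proof.
  intros Hq. apply (cont_ext q _ (fun a b => cL (mirror b) (mirror a))); [|exact Hq|].
  - intros a b _ _. symmetry. apply cL_mirror.
  - apply cont_mirror, cont_cL, Hq.
Qed.

Ltac cont_speeds :=
  cont_with ltac:(idtac;
    first
      [ cont_field_atoms
      | match goal with
        | |- cont_at ?q (fun a b => cL a b) => apply (cont_cL q); assumption
        | |- cont_at ?q (fun a b => cR a b) => apply (cont_cR q); assumption
        end ]).

Lemma cL_diag q : cL q q = sh q * asp q.
Proof.
  change (cL q q) with (sh q * (asp q + 2 * (vel_gap q q + pres_gap q q))).
  unfold vel_gap, pres_gap. rewrite !Rminus_diag_eq, Rmax_left by lra. unfold Rdiv. ring.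
Qed.

Lemma hLstar_diag q : adm q -> hLstar q q = sh q.
Proof.
  intros Hq. change (hLstar q q) with (sh (qLstar q q)).
  rewrite qLstar_eq by (try apply ustar_diag; assumption). reflexivity.
Qed.

Section ContinuityOfWaves.
Variable q : st.
Hypothesis Hq : adm q.

Lemma cL_add_cR_diag_neq0 : cL q q + cR q q <> 0.
Proof. pose proof (cL_pos q q Hq Hq). pose proof (cR_pos q q Hq Hq). lra. Qed.

Lemma cont_ustar : cont_at q (fun a b => ustar a b).
Proof. unfold Defs.ustar. cont_speeds. exact cL_add_cR_diag_neq0. Qed.

Lemma cont_hLstar : cont_at q (fun a b => hLstar a b).
Proof.
  pose proof (cL_pos q q Hq Hq). pose proof cL_add_cR_diag_neq0. unfold Defs.hLstar. cont_speeds.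
  - replace (/ sh q + (cR q q * (vel q - vel q) + Pr q - Pr q) / (cL q q * (cL q q + cR q q)))
      with (/ sh q) by (unfold Rdiv; ring).
    apply Rinv_neq_0_compat, adm_h_neq0, Hq.
  - apply adm_h_neq0, Hq.
  - apply Rmult_integral_contrapositive. split; lra.
Qed.

Lemma cont_Sig1 : cont_at q (fun a b => Sig1 a b).
Proof. unfold Defs.Sig1. cont_speeds. apply adm_h_neq0, Hq. Qed.

Lemma Sig1_diag : Sig1 q q = vel q - asp q.
Proof. unfold Defs.Sig1. rewrite cL_diag. field. apply adm_h_neq0, Hq. Qed.

Lemma lip_vel : lip_at q (fun a b => vel b - vel a).
Proof.
  apply (lip_ext q _ (fun a b => / sh b * (shu b - shu a) + (- shu a / (sh a * sh b)) * (sh b - sh a))).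
  { intros a b Ha Hb. pose proof (adm_h _ Ha). pose proof (adm_h _ Hb). unfold vel. field. lra. }
  pose proof (adm_h_neq0 q Hq).
  apply lip_plus; apply lip_mult; try (apply lip_jump; [apply Rabs_comp_le_stnorm | reflexivity]);
    cont_speeds; try assumption.
  apply Rmult_integral_contrapositive. split; assumption.
Qed.

Lemma lip_Pr : lip_at q (fun a b => Pr b - Pr a).
Proof.
  apply (lip_ext q _ (fun a b => g / 2 * (sh a + sh b) * (sh b - sh a)
      + eta / (2 * lam) * (shzz b - shzz a) + - (eta / (2 * lam)) * (shxx b - shxx a))).
  { intros a b Ha Hb. rewrite !Pr_polynomial by assumption. ring. }
  repeat apply lip_plus; apply lip_mult; try (apply lip_jump; [apply Rabs_comp_le_stnorm | reflexivity]);
    cont_speeds.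
Qed.

Lemma lip_ustar_sub_vel : lip_at q (fun a b => ustar a b - vel a).
Proof.
  apply (lip_ext q _ (fun a b => cR a b / (cL a b + cR a b) * (vel b - vel a)
      + - / (cL a b + cR a b) * (Pr b - Pr a))).
  { intros a b Ha Hb. rewrite ustar_sub_vel by assumption.
    pose proof (cL_pos a b Ha Hb). pose proof (cR_pos a b Ha Hb). field. lra. }
  pose proof cL_add_cR_diag_neq0.
  apply lip_plus; apply lip_mult; [cont_speeds | exact lip_vel | cont_speeds | exact lip_Pr];
    assumption.
Qed.
End ContinuityOfWaves.

Lemma cont_Sig3 q : adm q -> cont_at q (fun a b => Sig3 a b).
Proof.
  intros Hq. apply (cont_ext q _ (fun a b => - Sig1 (mirror b) (mirror a))); [|exact Hq|].
  - intros a b _ _. rewrite Sig1_mirror. ring.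
  - apply cont_opp, (cont_mirror q (fun a b => Sig1 a b)), cont_Sig1, Hq.
Qed.

Lemma Sig3_diag q : adm q -> Sig3 q q = vel q + asp q.
Proof.
  intros Hq. pose proof (Sig1_mirror q q) as H.
  rewrite (Sig1_diag (mirror q) Hq), vel_mirror in H. change (asp (mirror q)) with (asp q) in H. lra.
Qed.

Lemma hRstar_diag q : adm q -> hRstar q q = sh q.
Proof. intros Hq. rewrite <- hLstar_mirror. exact (hLstar_diag (mirror q) Hq). Qed.

Lemma cont_hRstar q : adm q -> cont_at q (fun a b => hRstar a b).
Proof.
  intros Hq. apply (cont_ext q _ (fun a b => hLstar (mirror b) (mirror a))); [|exact Hq|].
  - intros a b _ _. symmetry. apply hLstar_mirror.
  - apply cont_mirror, cont_hLstar, Hq.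
Qed.

Ltac cont_waves :=
  cont_with ltac:(idtac;
    first
      [ cont_field_atoms
      | match goal with
        | |- cont_at ?q (fun a b => cL a b) => apply (cont_cL q); assumption
        | |- cont_at ?q (fun a b => cR a b) => apply (cont_cR q); assumption
        | |- cont_at ?q (fun a b => ustar a b) => apply (cont_ustar q); assumption
        | |- cont_at ?q (fun a b => hLstar a b) => apply (cont_hLstar q); assumption
        | |- cont_at ?q (fun a b => hRstar a b) => apply (cont_hRstar q); assumption
        end ]).

Lemma lip_vel_sub_ustar q : adm q -> lip_at q (fun a b => vel b - ustar a b).
Proof.
  intros Hq. apply (lip_ext q _ (fun a b => ustar (mirror b) (mirror a) - vel (mirror b))).
  - intros a b _ _. rewrite ustar_mirror, vel_mirror. ring.
  - apply (lip_mirror q (fun a b => ustar a b - vel a)), lip_ustar_sub_vel, Hq.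
Qed.

Lemma sharp_viscosity q : adm q -> forall eps, 0 < eps ->
  near q (fun a b => Rabs (Sig1 a b - (vel q - asp q)) < eps /\ Rabs (Sig2 a b - vel q) < eps
                     /\ Rabs (Sig3 a b - (vel q + asp q)) < eps).
Proof.
  intros Hq eps He.
  pose proof (cont_Sig1 q Hq eps He) as C1. pose proof (cont_ustar q Hq eps He) as C2.
  pose proof (cont_Sig3 q Hq eps He) as C3. cbv beta in C1, C2, C3.
  rewrite Sig1_diag in C1 by exact Hq. rewrite ustar_diag in C2 by exact Hq.
  rewrite Sig3_diag in C3 by exact Hq.
  exact (near_and _ _ _ C1 (near_and _ _ _ C2 C3)).
Qed.

Lemma FluxL_diag q : adm q -> FluxL q q = Fphys q.
Proof.
  intros Hq. rewrite FluxL_eq by exact Hq. unfold stadd, fluct. rewrite !wave_sum_diag by exact Hq.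
  destruct (Fphys q) as [f1 f2 f3 f4]. cbn [sh shu shxx shzz]. f_equal; ring.
Qed.

Lemma FluxR_diag q : adm q -> FluxR q q = Fphys q.
Proof.
  intros Hq. rewrite FluxR_eq by exact Hq. unfold stsub, fluct. rewrite !wave_sum_diag by exact Hq.
  destruct (Fphys q) as [f1 f2 f3 f4]. cbn [sh shu shxx shzz]. f_equal; ring.
Qed.

Section FluxJump.
Variables ql qr : st.
Hypotheses (Hql : adm ql) (Hqr : adm qr).

Local Notation tl := (sh ql / hLstar ql qr).
Local Notation tr := (sh qr / hRstar ql qr).
Local Notation us := (ustar ql qr).

Lemma flux_jump_xx :
  shxx (FluxR ql qr) - shxx (FluxL ql qr)
  = shxx ql * (tl + 1) * (us - vel ql) + shxx qr * (tr + 1) * (vel qr - us).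
Proof.
  rewrite FluxL_eq, FluxR_eq by assumption. unfold stadd, stsub, fluct, Defs.Fphys.
  cbn [shxx]. pose proof (wave_sum_split shxx ql qr).
  rewrite <- (wave1_transport_xx ql qr Hql Hqr), <- (wave3_transport_xx ql qr Hql Hqr).
  unfold wave_sum, Defs.Sig2 in *. lra.
Qed.

Lemma flux_jump_zz :
  shzz (FluxR ql qr) - shzz (FluxL ql qr)
  = - (shzz ql * (tl + 1) / tl ^ 2) * (us - vel ql) - shzz qr * (tr + 1) / tr ^ 2 * (vel qr - us).
Proof.
  rewrite FluxL_eq, FluxR_eq by assumption. unfold stadd, stsub, fluct, Defs.Fphys.
  cbn [shzz]. pose proof (wave_sum_split shzz ql qr).
  pose proof (wave1_transport_zz ql qr Hql Hqr). pose proof (wave3_transport_zz ql qr Hql Hqr).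
  unfold wave_sum, Defs.Sig2 in *. lra.
Qed.
End FluxJump.

Lemma small_wave_combination q A B C D : adm q ->
  cont_at q A -> A q q = 0 -> cont_at q B -> B q q = 0 ->
  cont_at q C -> C q q = 0 -> cont_at q D -> D q q = 0 ->
  small_at q (fun a b => A a b * (ustar a b - vel a) + B a b * (vel b - ustar a b)
                         + C a b * (sh b - sh a) + D a b * (vel b - vel a)).
Proof.
  intros Hq CA A0 CB B0 CC C0 CD D0.
  repeat apply small_plus; apply small_mult; try assumption.
  - apply lip_ustar_sub_vel, Hq.
  - apply lip_vel_sub_ustar, Hq.
  - apply lip_jump; [apply Rabs_comp_le_stnorm | reflexivity].
  - apply lip_vel, Hq.
Qed.

(* In both defects the factors vanish at [(q, q)] because [hLstar q q = hRstar q q = sh q]. *)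
Lemma small_defect_xx q : adm q ->
  small_at q (fun a b => shxx (FluxR a b) - shxx (FluxL a b)
                         + -2 * sigxx q * ((shu b - shu a) - vel q * (sh b - sh a))).
Proof.
  intros Hq.
  apply (small_ext q _ (fun a b =>
      (shxx a * (sh a / hLstar a b + 1) - 2 * shxx q) * (ustar a b - vel a)
    + (shxx b * (sh b / hRstar a b + 1) - 2 * shxx q) * (vel b - ustar a b)
    + (-2 * sigxx q * (vel b - vel q)) * (sh b - sh a)
    + (-2 * sigxx q * (sh a - sh q)) * (vel b - vel a))).
  { intros a b Ha Hb. rewrite flux_jump_xx, (shu_eq a Ha), (shu_eq b Hb), (shxx_eq q Hq)
      by assumption. ring. }
  pose proof (hLstar_diag q Hq) as HL. pose proof (hRstar_diag q Hq) as HR.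
  pose proof (adm_h_neq0 q Hq) as Hh.
  apply small_wave_combination; try exact Hq; cbv beta;
    try solve [cont_waves; congruence]; rewrite ?HL, ?HR; field; exact Hh.
Qed.

Lemma small_defect_zz q : adm q ->
  small_at q (fun a b => shzz (FluxR a b) - shzz (FluxL a b)
                         + 2 * sigzz q * ((shu b - shu a) - vel q * (sh b - sh a))).
Proof.
  intros Hq.
  apply (small_ext q _ (fun a b =>
      (- (shzz a * (sh a / hLstar a b + 1) / (sh a / hLstar a b) ^ 2) + 2 * shzz q) * (ustar a b - vel a)
    + (- (shzz b * (sh b / hRstar a b + 1) / (sh b / hRstar a b) ^ 2) + 2 * shzz q) * (vel b - ustar a b)
    + (2 * sigzz q * (vel b - vel q)) * (sh b - sh a)
    + (2 * sigzz q * (sh a - sh q)) * (vel b - vel a))).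
  { intros a b Ha Hb. rewrite flux_jump_zz, (shu_eq a Ha), (shu_eq b Hb), (shzz_eq q Hq)
      by assumption. ring. }
  pose proof (hLstar_diag q Hq) as HL. pose proof (hRstar_diag q Hq) as HR.
  pose proof (adm_h_neq0 q Hq) as Hh. assert (Ht : sh q / sh q = 1) by (field; exact Hh).
  apply small_wave_combination; try exact Hq; cbv beta;
    try solve [cont_waves; rewrite ?HL, ?HR, ?Ht; try congruence; lra];
    rewrite ?HL, ?HR, ?Ht; field.
Qed.

Lemma consistency : consistent g eta lam.
Proof.
  intros q Hq. split; [apply FluxL_diag, Hq|]. split; [apply FluxR_diag, Hq|].
  intros eps He.
  destruct (near_and _ _ _ (small_defect_xx q Hq eps He) (small_defect_zz q Hq eps He))
    as [d [Hd K]].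
  exists d. split; [exact Hd|]. intros ql qr Hl Hr Dl Dr.
  destruct (K ql qr Hl Hr Dl Dr) as [Kxx Kzz]. cbv beta in Kxx, Kzz.
  pose proof (stdist_nonneg qr ql). assert (0 <= eps * stdist qr ql) by (apply Rmult_le_pos; lra).
  unfold stnorm, stadd, stsub, Defs.Bmat. cbn [sh shu shxx shzz].
  change (sh (FluxR ql qr)) with (sh (FluxL ql qr)). change (shu (FluxR ql qr)) with (shu (FluxL ql qr)).
  rewrite !Rminus_diag_eq, Rplus_0_r, Rabs_R0 by reflexivity.
  repeat apply Rmax_lub; assumption.
Qed.

(** * The scheme *)

(* Each state is weighted by the fraction of the cell it covers at time [dt]
   in the juxtaposed Riemann solutions. *)
Definition stencil (dt : R) (dx : Z -> R) (qn : Z -> st) (i : Z) : list (R * st) :=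
  let ql := qn (i - 1)%Z in let qc := qn i in let qr := qn (i + 1)%Z in
  let lm := dt / dx i in
  let m1 := - Rmin 0 (Sig1 qc qr) in let m2 := - Rmin 0 (Sig2 qc qr) in
  let m3 := - Rmin 0 (Sig3 qc qr) in
  let p1 := Rmax 0 (Sig1 ql qc) in let p2 := Rmax 0 (Sig2 ql qc) in
  let p3 := Rmax 0 (Sig3 ql qc) in
  (1 - lm * (m1 + p3), qc)
  :: (lm * (m1 - m2), qLstar qc qr) :: (lm * (m2 - m3), qRstar qc qr) :: (lm * m3, qr)
  :: (lm * p1, ql) :: (lm * (p2 - p1), qLstar ql qc) :: (lm * (p3 - p2), qRstar ql qc) :: nil.

Lemma Rabs_Sig1_le_Aspeed ql qr : Rabs (Sig1 ql qr) <= Aspeed ql qr.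
Proof. apply Rmax_l. Qed.

Lemma Rabs_Sig3_le_Aspeed ql qr : Rabs (Sig3 ql qr) <= Aspeed ql qr.
Proof.
  unfold Defs.Aspeed.
  apply Rle_trans with (Rmax (Rabs (Sig2 ql qr)) (Rabs (Sig3 ql qr))); apply Rmax_r.
Qed.

Section SchemeStep.
Variables (dt : R) (dx : Z -> R) (qn : Z -> st).
Hypotheses (Hdt : 0 < dt) (Hdx : forall i, 0 < dx i) (Hadm : forall i, adm (qn i))
  (Hcfl : CFL dt dx qn).

Lemma wsum_stencil i phi :
  wsum (stencil dt dx qn i) phi
  = phi (qn i) - dt / dx i * (wave_sum (Rmin 0) phi (qn i) (qn (i + 1)%Z)
                              + wave_sum (Rmax 0) phi (qn (i - 1)%Z) (qn i)).
Proof. unfold stencil, wave_sum. cbn [wsum]. ring. Qed.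

Lemma wtot_stencil i : wtot (stencil dt dx qn i) = 1.
Proof. unfold wtot. rewrite wsum_stencil. unfold wave_sum. ring. Qed.

Lemma scheme_eq_wmean i : scheme dt dx qn i = wmean (stencil dt dx qn i).
Proof.
  unfold Defs.scheme, wmean. rewrite !wsum_stencil, FluxL_eq, FluxR_eq by apply Hadm.
  unfold stsub, stadd, stscal, fluct. cbn [sh shu shxx shzz]. f_equal; ring.
Qed.

Lemma stencil_weights i : adm_weights (stencil dt dx qn i).
Proof.
  set (ql := qn (i - 1)%Z). set (qc := qn i). set (qr := qn (i + 1)%Z).
  assert (Hl : adm ql) by apply Hadm. assert (Hc : adm qc) by apply Hadm.
  assert (Hr : adm qr) by apply Hadm.
  pose proof (Sig1_lt_Sig2 qc qr Hc Hr). pose proof (Sig2_lt_Sig3 qc qr Hc Hr).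
  pose proof (Sig1_lt_Sig2 ql qc Hl Hc). pose proof (Sig2_lt_Sig3 ql qc Hl Hc).
  assert (Hlm : 0 < dt / dx i) by (apply Rdiv_lt_0_compat; [exact Hdt | apply Hdx]).
  assert (Cm : dt / dx i * - Rmin 0 (Sig1 qc qr) <= / 2).
  { apply (cfl_fraction_le _ _ (Rmin (dx i) (dx (i + 1)%Z)) _ (Aspeed qc qr)).
    - apply Hdx.
    - eapply Rle_trans; [apply neg_Rmin0_le_Rabs | apply Rabs_Sig1_le_Aspeed].
    - apply Hcfl.
    - apply Rmin_l.
    - lra. }
  assert (Cp : dt / dx i * Rmax 0 (Sig3 ql qc) <= / 2).
  { apply (cfl_fraction_le _ _ (Rmin (dx (i - 1)%Z) (dx i)) _ (Aspeed ql qc)).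
    - apply Hdx.
    - eapply Rle_trans; [apply Rmax0_le_Rabs | apply Rabs_Sig3_le_Aspeed].
    - pose proof (Hcfl (i - 1)%Z) as K. replace (i - 1 + 1)%Z with i in K by ring. exact K.
    - apply Rmin_r.
    - lra. }
  assert (Rmin 0 (Sig1 qc qr) <= Rmin 0 (Sig2 qc qr)) by (apply Rle_min_compat_l; lra).
  assert (Rmin 0 (Sig2 qc qr) <= Rmin 0 (Sig3 qc qr)) by (apply Rle_min_compat_l; lra).
  assert (Rmin 0 (Sig3 qc qr) <= 0) by apply Rmin_l.
  assert (0 <= Rmax 0 (Sig1 ql qc)) by apply Rmax_l.
  assert (Rmax 0 (Sig1 ql qc) <= Rmax 0 (Sig2 ql qc)) by (apply Rle_max_compat_l; lra).
  assert (Rmax 0 (Sig2 ql qc) <= Rmax 0 (Sig3 ql qc)) by (apply Rle_max_compat_l; lra).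
  intros w q Hin. unfold stencil in Hin. fold ql qc qr in Hin. cbn [In] in Hin.
  repeat destruct Hin as [Hin|Hin]; try (injection Hin; intros; subst); try contradiction;
    split; try apply qLstar_adm; try apply qRstar_adm; try assumption; nra.
Qed.

Lemma stencil_states i (P : st -> Prop) :
  (forall j, P (qn j)) ->
  (forall ql qr, adm ql -> adm qr -> P ql -> P (qLstar ql qr)) ->
  (forall ql qr, adm ql -> adm qr -> P qr -> P (qRstar ql qr)) ->
  forall w q, In (w, q) (stencil dt dx qn i) -> P q.
Proof.
  intros Hqn HL HR w q Hin. unfold stencil in Hin. cbn [In] in Hin.
  repeat destruct Hin as [Hin|Hin]; try (injection Hin; intros; subst); try contradiction;
    auto.
Qed.

Lemma scheme_adm i : adm (scheme dt dx qn i).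
Proof. rewrite scheme_eq_wmean. apply wmean_adm; [apply stencil_weights | apply wtot_stencil]. Qed.

Lemma scheme_energy_le i :
  Energy (scheme dt dx qn i) - Energy (qn i)
  + dt / dx i * (Gnum (qn i) (qn (i + 1)%Z) - Gnum (qn (i - 1)%Z) (qn i)) <= 0.
Proof.
  set (L := stencil dt dx qn i). set (m := scheme dt dx qn i).
  assert (Hm : m = wmean L) by apply scheme_eq_wmean.
  assert (Jensen : Energy m <= wsum L Energy).
  { rewrite <- (energy_tangent_self m). rewrite Hm at 2.
    apply affine_le_wsum; [apply wtot_stencil | apply energy_tangent_affine|].
    intros w q Hin. destruct (stencil_weights i w q Hin) as [Hw Hq]. split; [exact Hw|].
    apply energy_ge_tangent; [apply scheme_adm | exact Hq]. }
  unfold L in Jensen. rewrite wsum_stencil in Jensen.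
  pose proof (energy_wave_sum _ _ (Hadm (i - 1)%Z) (Hadm i)) as Hwave.
  pose proof (wave_sum_split Energy (qn (i - 1)%Z) (qn i)) as Hsplit.
  assert (Hlm : 0 < dt / dx i) by (apply Rdiv_lt_0_compat; [exact Hdt | apply Hdx]).
  unfold Gnum. set (lm := dt / dx i) in *.
  assert (lm * (Gflux (qn i) + wave_sum (Rmin 0) Energy (qn i) (qn (i + 1)%Z)
                - (Gflux (qn (i - 1)%Z) + wave_sum (Rmin 0) Energy (qn (i - 1)%Z) (qn i)))
          <= lm * (wave_sum (Rmin 0) Energy (qn i) (qn (i + 1)%Z)
                   + wave_sum (Rmax 0) Energy (qn (i - 1)%Z) (qn i))).
  { apply Rmult_le_compat_l; lra. }
  lra.
Qed.

Lemma scheme_sxx_le k i : 0 < k -> (forall j, sxx (qn j) <= k) -> sxx (scheme dt dx qn i) <= k.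
Proof.
  intros Hk Hj. apply (sxx_le_iff _ _ (scheme_adm i) Hk). rewrite scheme_eq_wmean.
  apply wmean_shxx_mul_sh_ge; [apply stencil_weights | apply wtot_stencil | |].
  - apply Rinv_0_lt_compat, Rmult_lt_0_compat; exact Hk.
  - apply stencil_states.
    + intros j. apply (sxx_le_iff _ _ (Hadm j) Hk), Hj.
    + intros ql qr Hl Hr H. rewrite qLstar_shxx_mul_sh; assumption.
    + intros ql qr Hl Hr H. rewrite qRstar_shxx_mul_sh; assumption.
Qed.

Lemma scheme_szz_ge k i : 0 < k -> (forall j, k <= szz (qn j)) -> k <= szz (scheme dt dx qn i).
Proof.
  intros Hk Hj. apply (szz_ge_iff _ _ (scheme_adm i) Hk). rewrite scheme_eq_wmean.
  apply wmean_shzz_div_sh3_ge; [apply stencil_weights | apply wtot_stencil | |].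
  - apply Rmult_lt_0_compat; exact Hk.
  - apply stencil_states.
    + intros j. apply (szz_ge_iff _ _ (Hadm j) Hk), Hj.
    + intros ql qr Hl Hr H. rewrite qLstar_shzz_div_sh3; assumption.
    + intros ql qr Hl Hr H. rewrite qRstar_shzz_div_sh3; assumption.
Qed.

(* At rest with a uniform pressure every interface has [ustar = 0]: the
   contact does not move and the outer waves carry no jump. *)
Lemma scheme_steady : (forall j, vel (qn j) = 0) -> (forall j j', Pr (qn j) = Pr (qn j')) ->
  forall i, scheme dt dx qn i = qn i.
Proof.
  intros Hv HP i.
  assert (Hus : forall j j', ustar (qn j) (qn j') = 0).
  { intros j j'. assert (ustar (qn j) (qn j') - vel (qn j) = 0).
    { rewrite ustar_sub_vel, !Hv, (HP j j') by apply Hadm. unfold Rdiv. ring. }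
    rewrite Hv in H. lra. }
  set (ql := qn (i - 1)%Z). set (qc := qn i). set (qr := qn (i + 1)%Z).
  assert (Hl : adm ql) by apply Hadm. assert (Hc : adm qc) by apply Hadm.
  assert (Hr : adm qr) by apply Hadm.
  assert (EL : qLstar qc qr = qc) by (apply qLstar_eq; try assumption; transitivity 0; [apply Hus | symmetry; apply Hv]).
  assert (ER : qRstar ql qc = qc) by (apply qRstar_eq; try assumption; transitivity 0; [apply Hus | symmetry; apply Hv]).
  pose proof (Sig2_lt_Sig3 qc qr Hc Hr). pose proof (Sig1_lt_Sig2 ql qc Hl Hc).
  assert (S2r : Sig2 qc qr = 0) by apply Hus. assert (S2l : Sig2 ql qc = 0) by apply Hus.
  assert (Hfl : forall phi, wave_sum (Rmin 0) phi qc qr = 0).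
  { intros phi. unfold wave_sum. rewrite EL, S2r, (Rmin_left 0 (Sig3 qc qr)) by lra.
    rewrite (Rmin_left 0 0) by lra. ring. }
  assert (Hfr : forall phi, wave_sum (Rmax 0) phi ql qc = 0).
  { intros phi. unfold wave_sum. rewrite ER, S2l, (Rmax_left 0 (Sig1 ql qc)) by lra.
    rewrite (Rmax_left 0 0) by lra. ring. }
  rewrite scheme_eq_wmean. unfold wmean. rewrite !wsum_stencil. fold ql qc qr.
  rewrite !Hfl, !Hfr. destruct qc as [h0 hu0 X0 Z0]. cbn [sh shu shxx shzz]. f_equal; ring.
Qed.
End SchemeStep.
End Model.

Theorem theorem1 :
  exists C : R,
  forall g eta lam : R, 0 < g -> 0 < eta -> 0 < lam ->
  (* (i) consistency *)
  consistent g eta lam /\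
  (* (ii) positivity *)
  (forall (dt : R) (dx : Z -> R) (qn : Z -> st),
     0 < dt -> (forall i, 0 < dx i) -> (forall i, adm (qn i)) ->
     CFL g eta lam dt dx qn ->
     forall i, adm (scheme g eta lam dt dx qn i)) /\
  (* (iii) conservativity in h and hu *)
  (forall ql qr : st,
     sh (FluxL g eta lam ql qr) = sh (FluxR g eta lam ql qr) /\
     shu (FluxL g eta lam ql qr) = shu (FluxR g eta lam ql qr)) /\
  (* (iv) discrete energy inequality *)
  (exists Gnum : st -> st -> R,
     (forall q, adm q -> Gnum q q = Gflux g eta lam q) /\
     (forall (dt : R) (dx : Z -> R) (qn : Z -> st),
        0 < dt -> (forall i, 0 < dx i) -> (forall i, adm (qn i)) ->
        CFL g eta lam dt dx qn ->
        forall i,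
          Energy g eta lam (scheme g eta lam dt dx qn i) - Energy g eta lam (qn i)
          + dt / dx i * (Gnum (qn i) (qn (i + 1)%Z) - Gnum (qn (i - 1)%Z) (qn i)) <= 0)) /\
  (* (v) maximum principle on s_xx, minimum principle on s_zz *)
  (forall (dt : R) (dx : Z -> R) (qn : Z -> st) (k : R),
     0 < dt -> (forall i, 0 < dx i) -> (forall i, adm (qn i)) ->
     CFL g eta lam dt dx qn -> 0 < k ->
     ((forall i, sxx (qn i) <= k) -> forall i, sxx (scheme g eta lam dt dx qn i) <= k) /\
     ((forall i, k <= szz (qn i)) -> forall i, k <= szz (scheme g eta lam dt dx qn i))) /\
  (* (vi) steady contact discontinuities are exactly resolved *)
  (forall (dt : R) (dx : Z -> R) (qn : Z -> st),
     0 < dt -> (forall i, 0 < dx i) -> (forall i, adm (qn i)) ->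
     CFL g eta lam dt dx qn ->
     (forall i, vel (qn i) = 0) ->
     (forall i j, Pr g eta lam (qn i) = Pr g eta lam (qn j)) ->
     forall i, scheme g eta lam dt dx qn i = qn i) /\
  (* (vii) finite numerical propagation speed, with an absolute constant C *)
  (forall ql qr, adm ql -> adm qr ->
     Aspeed g eta lam ql qr
       <= C * (Rabs (vel ql) + Rabs (vel qr) + asp g eta lam ql + asp g eta lam qr)) /\
  (* (viii) sharp numerical viscosity *)
  (forall q, adm q -> forall eps, 0 < eps -> exists delta, 0 < delta /\
     forall ql qr, adm ql -> adm qr -> stdist ql q < delta -> stdist qr q < delta ->
       Rabs (Sig1 g eta lam ql qr - (vel q - asp g eta lam q)) < eps /\
       Rabs (Sig2 g eta lam ql qr - vel q) < eps /\
       Rabs (Sig3 g eta lam ql qr - (vel q + asp g eta lam q)) < eps).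
Proof.
  exists 3. intros g eta lam Hg Heta Hlam.
  split; [apply consistency; assumption|].
  split; [intros; apply scheme_adm; assumption|].
  split; [intros; split; reflexivity|].
  split.
  { exists (Gnum g eta lam). split.
    - intros. apply Gnum_diag; assumption.
    - intros. apply scheme_energy_le; assumption. }
  split; [intros; split; intros; [apply scheme_sxx_le | apply scheme_szz_ge]; assumption|].
  split; [intros; apply scheme_steady; assumption|].
  split; [intros; apply Aspeed_le; assumption|].
  intros q Hq eps Heps. apply sharp_viscosity; assumption.
Qed.
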